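(* Consider the waning-immunity model described in the context, and suppose $(\omega_n+\mu)(\mu+r)<\beta_0\omega_n+\beta_n\mu$. Then, provided $\delta\ge0$ is sufficiently small, the endemic equilibrium of the system (the unique equilibrium with $I^*\in(0,1]$) is locally asymptotically stable.
   Context: Model: Fix an integer $n\ge 1$ and parameters $\delta\ge 0$ (rate of waning immunity), $\omega\ge 0$ (vaccination rate), $r>0$ (recovery rate), $\mu>0$ (birth = death rate), coverages $p_0=0$, $p_1,\dots,p_n\in[0,1]$, and transmission rates $0\le\beta_0\le\beta_1\le\dots\le\beta_n$ with $\beta_0<\beta_n$. Write $\omega_i=p_i\omega$, $\delta_i=(1-p_i)\delta$ (so $\delta_0=\delta$). The ODE system for $(S_0,\dots,S_n,I)$ is $$S_0'=\sum_{i=1}^n\omega_iS_i-\delta S_0+rI-\beta_0IS_0-\mu S_0,$$ $$S_i'=-\omega_iS_i+\delta_{i-1}S_{i-1}-\delta_iS_i-\beta_iIS_i-\mu S_i\quad(1\le i\le n-1),$$ $$S_n'=\mu-\omega_nS_n+\delta_{n-1}S_{n-1}-\beta_nIS_n-\mu S_n,$$ $$I'=I\sum_{i=0}^n\beta_iS_i-rI-\mu I,$$ with the normalization $\sum_iS_i+I=1$. An endemic equilibrium is an equilibrium $(S_0^*,\dots,S_n^*,I^* )$ of this system satisfying the normalization with $I^*\neq0$. Stability refers to the equilibrium of the $(n+2)$-dimensional ODE system. *)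

From Stdlib Require Import Reals Lra Lia.
From Coquelicot Require Import Coquelicot.
Open Scope R_scope.

(* State vector x : nat -> R with x 0 .. x n = S_0 .. S_n and x (S n) = I.
   Components beyond S n are irrelevant. *)

Definition om (p : nat -> R) (omega : R) (i : nat) : R := p i * omega.
Definition de (p : nat -> R) (delta : R) (i : nat) : R := (1 - p i) * delta.

(* The vector field of the waning-immunity model (n >= 1 assumed). *)
Definition field (n : nat) (delta omega r mu : R) (p beta : nat -> R)
    (x : nat -> R) (i : nat) : R :=
  let I := x (S n) in
  if Nat.eqb i 0 then
    sum_f_R0 (fun k => om p omega (S k) * x (S k)) (n - 1)
      - delta * x 0%nat + r * I - beta 0%nat * I * x 0%nat - mu * x 0%nat
  else if Nat.ltb i n then
    - om p omega i * x i + de p delta (i - 1) * x (i - 1)%nat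
      - de p delta i * x i - beta i * I * x i - mu * x i
  else if Nat.eqb i n then
    mu - om p omega n * x n + de p delta (n - 1) * x (n - 1)%nat
      - beta n * I * x n - mu * x n
  else if Nat.eqb i (S n) then
    I * sum_f_R0 (fun k => beta k * x k) n - r * I - mu * I
  else 0.

Definition close (N : nat) (d : R) (x e : nat -> R) : Prop :=
  forall i : nat, (i <= N)%nat -> Rabs (x i - e i) < d.

Definition solution_on (F : (nat -> R) -> nat -> R) (N : nat) (T : R)
    (x : R -> nat -> R) : Prop :=
  forall t : R, 0 <= t < T -> forall i : nat, (i <= N)%nat ->
    is_derive (fun s => x s i) t (F (x t) i).

Definition is_equilibrium (F : (nat -> R) -> nat -> R) (N : nat) (e : nat -> R) : Prop :=
  forall i : nat, (i <= N)%nat -> F e i = 0.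

Definition loc_asymp_stable (F : (nat -> R) -> nat -> R) (N : nat) (e : nat -> R) : Prop :=
  (forall eps : R, 0 < eps -> exists d : R, 0 < d /\
     forall (T : R) (x : R -> nat -> R), solution_on F N T x -> close N d (x 0) e ->
       forall t : R, 0 <= t < T -> close N eps (x t) e)
  /\
  (exists d : R, 0 < d /\
     forall x : R -> nat -> R, (forall T : R, solution_on F N T x) -> close N d (x 0) e ->
       forall i : nat, (i <= N)%nat ->
         is_lim (fun t => x t i) p_infty (e i)).

Definition endemic_eq (n : nat) (delta omega r mu : R) (p beta : nat -> R)
    (e : nat -> R) : Prop :=
  is_equilibrium (field n delta omega r mu p beta) (S n) e
  /\ sum_f_R0 e n + e (S n) = 1
  /\ 0 < e (S n) <= 1.

From Pilot Require Import Defs.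
From Stdlib Require Import Reals Lra Lia Psatz Classical.
From Coquelicot Require Import Coquelicot.
Open Scope R_scope.

(** For each fixed [I] the equilibrium equations of the susceptible classes are
    linear and solve explicitly; the remaining equation [Σ β_k S_k = r + μ]
    fails in opposite directions at [I = 0] (this is the threshold hypothesis)
    and at [I = 1], so an endemic equilibrium exists.

    For stability, work with the deviation [y = x - e].  The total population
    obeys [(Σ y)' = - μ Σ y]; the intermediate classes [S_1 .. S_{n-1}] are fed
    only by waning, so at equilibrium they are [O(δ)] and their deviations are
    damped at rate at least [μ]; and in the [(y_n, y_I)] block the cross terms
    cancel, which makes that block stable as long as [I*] stays away from [0]
    uniformly in small [δ] (the threshold hypothesis again).  A weighted sum of
    these squares plus a small [y_n y_I] term is then a strict quadratic
    Lyapunov function for all small [δ], which yields local asymptotic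
    stability. *)

(** * Finite sums and elementary inequalities *)

(** The sum over [i < k]; unlike [sum_f_R0] (over [i <= k]) it has an empty case. *)
Fixpoint sum_lt (f : nat -> R) (k : nat) : R :=
  match k with O => 0 | S k => sum_lt f k + f k end.

Lemma sum_lt_S f k : sum_lt f (S k) = sum_lt f k + f k.
Proof. reflexivity. Qed.

Lemma sum_f_R0_sum_lt f m : sum_f_R0 f m = sum_lt f (S m).
Proof. induction m as [|m IH]; simpl in *; [ring|]. rewrite IH. ring. Qed.

Lemma sum_lt_ext f g k : (forall i, (i < k)%nat -> f i = g i) -> sum_lt f k = sum_lt g k.
Proof. induction k as [|k IH]; intros H; simpl; [reflexivity|]. rewrite IH, H; auto. Qed.

Lemma sum_lt_plus f g k : sum_lt (fun i => f i + g i) k = sum_lt f k + sum_lt g k.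
Proof. induction k as [|k IH]; simpl; [ring|]. rewrite IH. ring. Qed.

Lemma sum_lt_minus f g k : sum_lt (fun i => f i - g i) k = sum_lt f k - sum_lt g k.
Proof. induction k as [|k IH]; simpl; [ring|]. rewrite IH. ring. Qed.

Lemma sum_lt_scal a f k : sum_lt (fun i => a * f i) k = a * sum_lt f k.
Proof. induction k as [|k IH]; simpl; [ring|]. rewrite IH. ring. Qed.

Lemma sum_lt_const a k : sum_lt (fun _ => a) k = INR k * a.
Proof. induction k as [|k IH]; simpl sum_lt; [simpl; ring|]. rewrite IH, S_INR. ring. Qed.

Lemma sum_lt_le f g k : (forall i, (i < k)%nat -> f i <= g i) -> sum_lt f k <= sum_lt g k.
Proof.
  induction k as [|k IH]; intros H; simpl; [lra|].
  apply Rplus_le_compat; [apply IH; auto | apply H; lia].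
Qed.

Lemma sum_lt_nonneg f k : (forall i, (i < k)%nat -> 0 <= f i) -> 0 <= sum_lt f k.
Proof.
  intros H. apply Rle_trans with (sum_lt (fun _ => 0) k).
  - rewrite sum_lt_const. lra.
  - apply sum_lt_le. exact H.
Qed.

Lemma sum_lt_shift f k : sum_lt f (S k) = f 0%nat + sum_lt (fun i => f (S i)) k.
Proof. induction k as [|k IH]; simpl in *; [ring|]. rewrite IH. ring. Qed.

Lemma sum_lt_telescope g k : sum_lt (fun i => g i - g (S i)) k = g 0%nat - g k.
Proof. induction k as [|k IH]; simpl; [ring|]. rewrite IH. ring. Qed.

Lemma sum_lt_split_ends f k :
  sum_lt f (S (S k)) = f 0%nat + sum_lt (fun i => f (S i)) k + f (S k).
Proof. rewrite (sum_lt_shift f (S k)). simpl. ring. Qed.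

Lemma sum_lt_prefix_le f k m : (k <= m)%nat -> (forall i, (i < m)%nat -> 0 <= f i) ->
  sum_lt f k <= sum_lt f m.
Proof.
  intros Hkm Hf. induction m as [|m IH]; [replace k with 0%nat by lia; lra|].
  destruct (Nat.eq_dec k (S m)) as [->|Hne]; [lra|].
  simpl. assert (0 <= f m) by (apply Hf; lia).
  assert (sum_lt f k <= sum_lt f m) by (apply IH; [lia | intros; apply Hf; lia]). lra.
Qed.

Lemma sum_lt_term_le f k j : (forall i, (i < k)%nat -> 0 <= f i) -> (j < k)%nat ->
  f j <= sum_lt f k.
Proof.
  intros Hf Hj. apply Rle_trans with (sum_lt f (S j)).
  - simpl. assert (0 <= sum_lt f j) by (apply sum_lt_nonneg; intros; apply Hf; lia). lra.
  - apply sum_lt_prefix_le; auto.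
Qed.

Lemma Rabs_sum_lt f k : Rabs (sum_lt f k) <= sum_lt (fun i => Rabs (f i)) k.
Proof.
  induction k as [|k IH]; simpl; [rewrite Rabs_R0; lra|].
  eapply Rle_trans; [apply Rabs_triang | lra].
Qed.

Lemma sum_lt_sq_le f k : (sum_lt f k)^2 <= INR k * sum_lt (fun i => (f i)^2) k.
Proof.
  induction k as [|k IH]; [simpl; lra|].
  rewrite !sum_lt_S, S_INR.
  assert (Hcross : 2 * f k * sum_lt f k <= INR k * (f k)^2 + sum_lt (fun i => (f i)^2) k).
  { rewrite <- sum_lt_const, <- sum_lt_plus, <- sum_lt_scal.
    apply sum_lt_le. intros i _. pose proof (pow2_ge_0 (f k - f i)). nra. }
  assert (0 <= sum_lt (fun i => (f i)^2) k) by (apply sum_lt_nonneg; intros; apply pow2_ge_0).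
  pose proof (pos_INR k). nra.
Qed.

Lemma is_derive_sum_lt (f : R -> nat -> R) (df : nat -> R) t k :
  (forall i, (i < k)%nat -> is_derive (fun s => f s i) t (df i)) ->
  is_derive (fun s => sum_lt (f s) k) t (sum_lt df k).
Proof.
  induction k as [|k IH]; intros H; simpl.
  - exact (is_derive_const (0 : R) t).
  - apply (is_derive_plus (fun s => sum_lt (f s) k) (fun s => f s k)); auto.
Qed.

Lemma quad_form_nonpos P Q S x y : P < 0 -> S^2 <= P * Q -> P * x^2 + Q * y^2 + 2 * S * x * y <= 0.
Proof.
  intros HP HS.
  assert (P * (P * x^2 + Q * y^2 + 2 * S * x * y) = (P * x + S * y)^2 + (P * Q - S^2) * y^2) by ring.
  assert (0 <= (P * Q - S^2) * y^2) by (apply Rmult_le_pos; [lra | apply pow2_ge_0]).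
  pose proof (pow2_ge_0 (P * x + S * y)). nra.
Qed.

Lemma young_Rabs s u v M : Rabs s <= M -> s * u * v <= M * (u^2 + v^2) / 2.
Proof.
  intros H.
  assert (Habs : s * u * v <= Rabs s * (Rabs u * Rabs v)).
  { rewrite <- !Rabs_mult, Rmult_assoc. apply Rle_abs. }
  rewrite <- (pow2_abs u), <- (pow2_abs v).
  pose proof (Rabs_pos u). pose proof (Rabs_pos v). pose proof (Rabs_pos s).
  pose proof (pow2_ge_0 (Rabs u - Rabs v)).
  assert (Rabs s * (Rabs u * Rabs v) <= M * (Rabs u * Rabs v)) by (apply Rmult_le_compat_r; nra).
  nra.
Qed.

Lemma young_weighted X P lam : 0 < lam -> X * P <= lam * X^2 + P^2 / (4 * lam).
Proof.
  intros Hl.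
  assert (lam * X^2 + P^2 / (4 * lam) - X * P = (2 * lam * X - P)^2 / (4 * lam)) by (field; lra).
  assert (0 <= (2 * lam * X - P)^2 / (4 * lam)) by (apply Rdiv_le_0_compat; [apply pow2_ge_0 | lra]).
  lra.
Qed.

Lemma sq_sum2_le a b : (a + b)^2 <= 2 * (a^2 + b^2).
Proof. pose proof (pow2_ge_0 (a - b)). nra. Qed.

Lemma sq_sum3_le a b c : (a + b + c)^2 <= 3 * (a^2 + b^2 + c^2).
Proof. pose proof (pow2_ge_0 (a - b)). pose proof (pow2_ge_0 (b - c)). pose proof (pow2_ge_0 (a - c)). nra. Qed.

Lemma Rabs_lt_of_sq_lt u a : 0 < a -> u^2 < a^2 -> Rabs u < a.
Proof.
  intros Ha H. rewrite <- (Rabs_pos_eq a) by lra. apply Rsqr_lt_abs_0. unfold Rsqr. simpl in H. lra.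
Qed.

(** * Calculus on the real line and a Lyapunov criterion *)

(** Coquelicot's derivative rules specialised to [R -> R], where [apply] can
    infer the ring structure. *)
Lemma is_derive_Rplus (f g : R -> R) t df dg :
  is_derive f t df -> is_derive g t dg -> is_derive (fun s => f s + g s) t (df + dg).
Proof. exact (is_derive_plus f g t df dg). Qed.

Lemma is_derive_Rscal (f : R -> R) t k df : is_derive f t df -> is_derive (fun s => k * f s) t (k * df).
Proof. exact (is_derive_scal f t k df). Qed.

Lemma is_derive_Rmult (f g : R -> R) t df dg :
  is_derive f t df -> is_derive g t dg -> is_derive (fun s => f s * g s) t (df * g t + f t * dg).
Proof. intros Hf Hg. exact (is_derive_mult f g t df dg Hf Hg Rmult_comm). Qed.

Lemma is_derive_Rsq (f : R -> R) t df : is_derive f t df -> is_derive (fun s => (f s)^2) t (2 * f t * df).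
Proof.
  intros Hf. replace (2 * f t * df) with (INR 2 * df * f t ^ Nat.pred 2) by (simpl; ring).
  exact (is_derive_pow f 2 t df Hf).
Qed.

Lemma is_derive_Rminus_const (f : R -> R) t c df : is_derive f t df -> is_derive (fun s => f s - c) t df.
Proof.
  intros Hf. replace df with (df - 0) by ring.
  exact (is_derive_minus f (fun _ => c) t df 0 Hf (is_derive_const c t)).
Qed.

Lemma continuity_pt_of_is_derive (g : R -> R) t l : is_derive g t l -> continuity_pt g t.
Proof.
  intros H. apply continuity_pt_filterlim, (ex_derive_continuous g t). exists l; exact H.
Qed.

Lemma continuity_pt_eps (g : R -> R) t : continuity_pt g t -> forall eps, 0 < eps ->
  exists eta, 0 < eta /\ forall u, Rabs (u - t) < eta -> Rabs (g u - g t) < eps.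
Proof.
  intros H eps Heps. apply continuity_pt_locally with (eps := mkposreal eps Heps) in H.
  destruct H as [eta Heta]. exists eta. split; [apply cond_pos|]. intros u Hu. exact (Heta u Hu).
Qed.

Lemma derive_nonpos_nonincreasing (g dg : R -> R) a b : a <= b ->
  (forall u, a <= u <= b -> is_derive g u (dg u)) ->
  (forall u, a <= u <= b -> dg u <= 0) -> g b <= g a.
Proof.
  intros Hab Hd Hn.
  destruct (MVT_gen g a b dg) as [c [Hc Heq]];
    rewrite ?Rmin_left, ?Rmax_right in * by lra.
  - intros u Hu. apply Hd. lra.
  - intros u Hu. apply (continuity_pt_of_is_derive g u (dg u)), Hd. lra.
  - assert (dg c * (b - a) <= 0) by (apply Rmult_le_0_r; [apply Hn; lra | lra]). lra.
Qed.

Lemma continuity_pt_le_left (g : R -> R) l s a : continuity_pt g s -> l < s ->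
  (forall u, l <= u < s -> g u <= a) -> g s <= a.
Proof.
  intros Hc Hls Hle. apply Rnot_lt_le. intros Hgs.
  destruct (continuity_pt_eps g s Hc (g s - a)) as [eta [Heta Hnear]]; [lra|].
  set (u := Rmax l (s - eta / 2)).
  assert (Hu1 : l <= u < s) by (unfold u, Rmax; destruct Rle_dec; lra).
  assert (Hu2 : Rabs (u - s) < eta) by (unfold u, Rmax; destruct Rle_dec; apply Rabs_def1; lra).
  specialize (Hnear u Hu2). specialize (Hle u Hu1). apply Rabs_def2 in Hnear. lra.
Qed.

Lemma sublevel_forward_invariant (g dg : R -> R) T thr :
  (forall t, 0 <= t < T -> is_derive g t (dg t)) -> g 0 < thr ->
  (forall t, 0 <= t < T -> g t < thr -> dg t <= 0) ->
  forall t, 0 <= t < T -> g t <= g 0.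
Proof.
  intros Hd Hstart Hn t1 Ht1.
  apply Rnot_lt_le. intros Hgt.
  set (good := fun s => 0 <= s <= t1 /\ forall u, 0 <= u <= s -> g u <= g 0).
  assert (Hgood0 : good 0) by (split; [lra|]; intros u Hu; replace u with 0 by lra; lra).
  destruct (completeness good) as [s [Hub Hlub]].
  { exists t1. intros s [Hs _]. lra. }
  { exists 0. exact Hgood0. }
  assert (Hs0 : 0 <= s) by (apply Hub, Hgood0).
  assert (Hs1 : s <= t1) by (apply Hlub; intros x [Hx _]; lra).
  assert (Hbefore : forall u, 0 <= u < s -> g u <= g 0).
  { intros u Hu. apply NNPP. intros Hgu.
    assert (s <= u); [|lra].
    apply Hlub. intros x [Hx Hgx].
    destruct (Rle_or_lt u x); [exfalso; apply Hgu, Hgx; lra | lra]. }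
  assert (Hcs : continuity_pt g s) by (apply (continuity_pt_of_is_derive g s (dg s)), Hd; lra).
  assert (Hat : g s <= g 0).
  { destruct (Req_dec s 0) as [->|Hz]; [lra|].
    apply (continuity_pt_le_left g 0 s); [exact Hcs | lra | exact Hbefore]. }
  assert (Hst : s < t1) by (destruct (Req_dec s t1) as [->|]; lra).
  destruct (continuity_pt_eps g s Hcs (thr - g s)) as [eta [Heta Hnear]]; [lra|].
  set (s2 := Rmin t1 (s + eta / 2)).
  assert (Hs2 : s < s2 <= t1 /\ s2 - s < eta) by (unfold s2, Rmin; destruct Rle_dec; lra).
  assert (Hgood2 : good s2).
  { split; [lra|]. intros u Hu.
    destruct (Rlt_or_le u s) as [Hus|Hsu]; [apply Hbefore; lra|].
    enough (g u <= g s) by lra.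
    apply (derive_nonpos_nonincreasing g dg s u Hsu).
    - intros v Hv. apply Hd. lra.
    - intros v Hv. apply Hn; [lra|].
      assert (Hv_near : Rabs (v - s) < eta) by (apply Rabs_def1; lra).
      specialize (Hnear v Hv_near). apply Rabs_def2 in Hnear. lra. }
  specialize (Hub s2 Hgood2). lra.
Qed.

(** [Defs.close] is qualified because Coquelicot exports its own [close]. *)
Section LyapunovCriterion.

Variables (F : (nat -> R) -> nat -> R) (N : nat) (e : nat -> R).
Variables (V W : (nat -> R) -> R) (m M al rho : R).

Hypothesis V_derive : forall (x : R -> nat -> R) t,
  (forall i, (i <= N)%nat -> is_derive (fun s => x s i) t (F (x t) i)) ->
  is_derive (fun s => V (x s)) t (W (x t)).
Hypothesis m_pos : 0 < m.
Hypothesis V_lower : forall x i, (i <= N)%nat -> m * (x i - e i)^2 <= V x.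
Hypothesis M_ge0 : 0 <= M.
Hypothesis V_upper : forall x d, 0 <= d -> Defs.close N d x e -> V x <= M * d^2.
Hypothesis al_pos : 0 < al.
Hypothesis rho_pos : 0 < rho.
Hypothesis W_decay : forall x, Defs.close N rho x e -> W x <= - al * V x.

Lemma lyapunov_nonneg x : 0 <= V x.
Proof.
  apply Rle_trans with (m * (x 0%nat - e 0%nat)^2); [|apply V_lower; lia].
  apply Rmult_le_pos; [lra | apply pow2_ge_0].
Qed.

Lemma close_of_lyapunov_lt x r0 : 0 < r0 -> V x < m * r0^2 -> Defs.close N r0 x e.
Proof.
  intros Hr0 HV i Hi. apply Rabs_lt_of_sq_lt; [exact Hr0|].
  apply Rmult_lt_reg_l with m; [exact m_pos|]. specialize (V_lower x i Hi). lra.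
Qed.

Lemma lyapunov_nonincreasing_near r0 : 0 < r0 <= rho -> exists d, 0 < d /\
  forall T x, solution_on F N T x -> Defs.close N d (x 0) e ->
    V (x 0) < m * r0^2 /\ forall t, 0 <= t < T -> V (x t) <= V (x 0).
Proof.
  intros Hr0.
  set (d := Rmin r0 (m * r0 / (M + 1))).
  assert (Hd : 0 < d) by (apply Rmin_pos; [lra | apply Rdiv_lt_0_compat; nra]).
  assert (Hd1 : d <= r0) by apply Rmin_l.
  assert (Hd2 : d * (M + 1) <= m * r0).
  { assert (Hd2 : d <= m * r0 / (M + 1)) by apply Rmin_r.
    apply Rmult_le_compat_r with (r := M + 1) in Hd2; [|lra].
    replace (m * r0 / (M + 1) * (M + 1)) with (m * r0) in Hd2 by (field; lra). exact Hd2. }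
  exists d. split; [exact Hd|]. intros T x Hsol Hx0.
  assert (HV0 : V (x 0) < m * r0^2).
  { specialize (V_upper (x 0) d (Rlt_le _ _ Hd) Hx0).
    assert (d * (d * (M + 1)) <= r0 * (m * r0)) by (apply Rmult_le_compat; nra). nra. }
  split; [exact HV0|].
  apply (sublevel_forward_invariant (fun s => V (x s)) (fun s => W (x s)) T (m * r0^2)).
  - intros t Ht. apply V_derive. intros i Hi. apply Hsol; auto.
  - exact HV0.
  - intros t Ht Hlt.
    assert (Hc : Defs.close N rho (x t) e).
    { intros i Hi. apply Rlt_le_trans with r0; [|lra]. apply (close_of_lyapunov_lt (x t) r0); auto; lra. }
    specialize (W_decay _ Hc). pose proof (lyapunov_nonneg (x t)). nra.
Qed.

Lemma lyapunov_exp_decay (x : R -> nat -> R) :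
  (forall T, solution_on F N T x) -> (forall t, 0 <= t -> V (x t) < m * rho^2) ->
  forall t, 0 <= t -> V (x t) * exp (al * t) <= V (x 0).
Proof.
  intros Hsol Hsmall t Ht.
  replace (V (x 0)) with (V (x 0) * exp (al * 0)) by (rewrite Rmult_0_r, exp_0; ring).
  apply (derive_nonpos_nonincreasing (fun s => V (x s) * exp (al * s))
           (fun s => W (x s) * exp (al * s) + V (x s) * (al * exp (al * s))) 0 t Ht).
  - intros u Hu. apply (is_derive_mult (fun s => V (x s)) (fun s => exp (al * s))).
    + apply V_derive. intros j Hj. apply (Hsol (u + 1)); [lra | exact Hj].
    + auto_derive; auto. ring.
    + intros; apply Rmult_comm.
  - intros u Hu.
    assert (Hc : Defs.close N rho (x u) e) by (apply close_of_lyapunov_lt; auto; apply Hsmall; lra).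
    specialize (W_decay _ Hc). pose proof (exp_pos (al * u)). pose proof (lyapunov_nonneg (x u)). nra.
Qed.

Lemma lyapunov_loc_asymp_stable : loc_asymp_stable F N e.
Proof.
  split.
  - intros eps Heps.
    set (r0 := Rmin eps rho).
    destruct (lyapunov_nonincreasing_near r0) as [d [Hd Hstay]];
      [split; [apply Rmin_pos; lra | apply Rmin_r]|].
    exists d. split; [exact Hd|]. intros T x Hsol Hx0 t Ht i Hi.
    destruct (Hstay T x Hsol Hx0) as [HV0 HVt].
    apply Rlt_le_trans with r0; [|apply Rmin_l].
    apply (close_of_lyapunov_lt (x t) r0); [apply Rmin_pos; lra | specialize (HVt t Ht); lra | exact Hi].
  - destruct (lyapunov_nonincreasing_near rho) as [d [Hd Hstay]]; [lra|].
    exists d. split; [exact Hd|]. intros x Hsol Hx0 i Hi.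
    assert (Hsmall : forall t, 0 <= t -> V (x t) < m * rho^2).
    { intros t Ht. destruct (Hstay (t + 1) x (Hsol (t + 1)) Hx0) as [HV0 HVt].
      specialize (HVt t (conj Ht (Rlt_plus_1 t))). lra. }
    pose proof (lyapunov_exp_decay x Hsol Hsmall) as Hdecay.
    set (V0 := V (x 0)).
    assert (HV0 : 0 <= V0) by apply lyapunov_nonneg.
    apply is_lim_spec. intros eps.
    pose proof (cond_pos eps) as Heps.
    assert (Hden : 0 < m * al * eps^2) by (apply Rmult_lt_0_compat; [nra | apply pow_lt; lra]).
    exists (V0 / (m * al * eps^2)). intros t Ht.
    assert (Ht0 : 0 <= t) by (apply Rle_trans with (V0 / (m * al * eps^2)); [apply Rdiv_le_0_compat|]; lra).
    assert (HtV : V0 < t * (m * al * eps^2)).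
    { apply Rmult_lt_compat_r with (r := m * al * eps^2) in Ht; [|lra].
      replace (V0 / (m * al * eps^2) * (m * al * eps^2)) with V0 in Ht by (field; lra). lra. }
    assert (Hexp : 1 + al * t <= exp (al * t)).
    { destruct (Req_dec (al * t) 0) as [Hz|Hz]; [rewrite Hz, exp_0; lra | left; apply exp_ineq1, Hz]. }
    specialize (Hdecay t Ht0). pose proof (V_lower (x t) i Hi) as Hlow. pose proof (lyapunov_nonneg (x t)).
    assert (Hsq : m * (x t i - e i)^2 * (1 + al * t) <= V0).
    { apply Rle_trans with (V (x t) * exp (al * t)); [|exact Hdecay].
      apply Rmult_le_compat; [apply Rmult_le_pos; [lra | apply pow2_ge_0] | nra | lra | lra]. }
    apply Rabs_lt_of_sq_lt; [exact Heps|].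
    apply Rnot_le_lt. intros Hge.
    assert (m * eps^2 * (1 + al * t) <= m * (x t i - e i)^2 * (1 + al * t)).
    { apply Rmult_le_compat_r; [nra|]. apply Rmult_le_compat_l; lra. }
    nra.
Qed.

End LyapunovCriterion.

Lemma beta_bounds n (beta : nat -> R) : (forall i, (i < n)%nat -> beta i <= beta (S i)) ->
  forall k, (k <= n)%nat -> beta 0%nat <= beta k <= beta n.
Proof.
  intros H k Hk. split.
  - induction k as [|k IH]; [lra|]. apply Rle_trans with (beta k); [apply IH; lia | apply H; lia].
  - assert (Hup : forall j k, (k + j = n)%nat -> beta k <= beta n).
    { induction j as [|j IH]; intros k0 Hk0; [replace k0 with n by lia; lra|].
      apply Rle_trans with (beta (S k0)); [apply H; lia | apply IH; lia]. }
    apply (Hup (n - k)%nat). lia.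
Qed.

Lemma om_bounds n (p : nat -> R) omega : 0 <= omega -> (forall i, (1 <= i <= n)%nat -> 0 <= p i <= 1) ->
  forall i, (1 <= i <= n)%nat -> 0 <= om p omega i <= omega.
Proof. intros Ho Hp i Hi. specialize (Hp i Hi). unfold om. split; nra. Qed.

Lemma de_bounds n (p : nat -> R) d : 0 <= d -> p 0%nat = 0 -> (forall i, (1 <= i <= n)%nat -> 0 <= p i <= 1) ->
  forall i, (i <= n)%nat -> 0 <= de p d i <= d.
Proof.
  intros Hd Hp0 Hp [|i] Hi; unfold de; [rewrite Hp0; lra|].
  assert (0 <= p (S i) <= 1) by (apply Hp; lia). split; nra.
Qed.

Lemma sum_beta_split n' (beta y : nat -> R) :
  sum_lt (fun k => beta k * y k) (S (S n')) =
  beta 0%nat * sum_lt y (S (S n')) + sum_lt (fun k => (beta (S k) - beta 0%nat) * y (S k)) n'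
  + (beta (S n') - beta 0%nat) * y (S n').
Proof.
  rewrite !sum_lt_split_ends.
  replace (sum_lt (fun i => beta (S i) * y (S i)) n') with
    (sum_lt (fun i => beta 0%nat * y (S i) + (beta (S i) - beta 0%nat) * y (S i)) n')
    by (apply sum_lt_ext; intros; ring).
  rewrite sum_lt_plus, sum_lt_scal. ring.
Qed.

Section FieldComponents.

Variables (n' : nat) (d omega r mu : R) (p beta x : nat -> R).

Local Notation F := (field (S n') d omega r mu p beta x).

Lemma field_S0 : F 0%nat =
  sum_lt (fun k => om p omega (S k) * x (S k)) (S n') - d * x 0%nat + r * x (S (S n'))
  - beta 0%nat * x (S (S n')) * x 0%nat - mu * x 0%nat.
Proof.
  unfold field. simpl Nat.eqb. cbv iota.
  rewrite sum_f_R0_sum_lt. replace (S n' - 1)%nat with n' by lia. reflexivity.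
Qed.

Lemma field_mid k : (k < n')%nat -> F (S k) =
  - om p omega (S k) * x (S k) + de p d k * x k - de p d (S k) * x (S k)
  - beta (S k) * x (S (S n')) * x (S k) - mu * x (S k).
Proof.
  intros Hk. unfold field.
  replace (Nat.ltb (S k) (S n')) with true by (symmetry; apply Nat.ltb_lt; lia).
  replace (S k - 1)%nat with k by lia. reflexivity.
Qed.

Lemma field_last : F (S n') =
  mu - om p omega (S n') * x (S n') + de p d n' * x n'
  - beta (S n') * x (S (S n')) * x (S n') - mu * x (S n').
Proof.
  unfold field.
  replace (Nat.ltb (S n') (S n')) with false by (symmetry; apply Nat.ltb_ge; lia).
  rewrite Nat.eqb_refl. replace (S n' - 1)%nat with n' by lia. reflexivity.
Qed.

Lemma field_I : F (S (S n')) =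
  x (S (S n')) * sum_lt (fun k => beta k * x k) (S (S n')) - r * x (S (S n')) - mu * x (S (S n')).
Proof.
  unfold field.
  replace (Nat.ltb (S (S n')) (S n')) with false by (symmetry; apply Nat.ltb_ge; lia).
  replace (Nat.eqb (S (S n')) (S n')) with false by (symmetry; apply Nat.eqb_neq; lia).
  rewrite Nat.eqb_refl. change (Nat.eqb (S (S n')) 0) with false. cbv iota.
  rewrite sum_f_R0_sum_lt. reflexivity.
Qed.

Lemma field_total : p 0%nat = 0 ->
  sum_lt F (S (S (S n'))) = mu - mu * sum_lt x (S (S (S n'))).
Proof.
  intros Hp0.
  rewrite sum_lt_split_ends, sum_lt_S, field_S0, field_last, field_I.
  rewrite (sum_lt_ext (fun k => F (S k))
    (fun k => (de p d k * x k - de p d (S k) * x (S k))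
              - (om p omega (S k) * x (S k) + x (S (S n')) * (beta (S k) * x (S k)) + mu * x (S k))))
    by (intros i Hi; rewrite field_mid by lia; ring).
  rewrite sum_lt_minus, sum_lt_telescope, !sum_lt_plus, !sum_lt_scal.
  rewrite (sum_lt_S (fun k => om p omega (S k) * x (S k)) n').
  rewrite (sum_lt_split_ends (fun k => beta k * x k)), (sum_lt_split_ends x).
  rewrite (sum_lt_S (fun i => x (S i)) n').
  unfold de. rewrite Hp0. ring.
Qed.

End FieldComponents.

(** * Existence of an endemic equilibrium *)

Lemma continuous_Rdiv (f g : R -> R) x :
  continuous f x -> continuous g x -> g x <> 0 -> continuous (fun y => f y / g y) x.
Proof. intros Hf Hg Hx. apply (continuous_mult f (fun y => / g y)); auto. apply continuous_Rinv_comp; auto. Qed.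

Lemma continuous_sum_lt (f : nat -> R -> R) k x : (forall i, (i < k)%nat -> continuous (f i) x) ->
  continuous (fun y => sum_lt (fun i => f i y) k) x.
Proof.
  induction k as [|k IH]; intros H; simpl; [apply continuous_const|].
  apply (continuous_plus (fun y => sum_lt (fun i => f i y) k)); auto.
Qed.

Section Existence.

Variables (n' : nat) (omega r mu d : R) (p beta : nat -> R).

Hypothesis omega_ge0 : 0 <= omega.
Hypothesis r_pos : 0 < r.
Hypothesis mu_pos : 0 < mu.
Hypothesis p0 : p 0%nat = 0.
Hypothesis p_range : forall i : nat, (1 <= i <= S n')%nat -> 0 <= p i <= 1.
Hypothesis beta0_ge0 : 0 <= beta 0%nat.
Hypothesis beta_mono : forall i : nat, (i < S n')%nat -> beta i <= beta (S i).
Hypothesis beta0_lt : beta 0%nat < beta (S n').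
Hypothesis d_ge0 : 0 <= d.
Hypothesis threshold :
  (om p omega (S n') + mu) * (mu + r) < beta 0%nat * om p omega (S n') + beta (S n') * mu.

Let beta_b := beta_bounds (S n') beta beta_mono.
Let om_b := om_bounds (S n') p omega omega_ge0 p_range.
Let de_b := de_bounds (S n') p d d_ge0 p0 p_range.

(** The equilibrium with prescribed infective level [I]: [S_k = chain k I * S_0]
    for [k <= n'], [S_n] solves its own equation, and [S_0] is fixed by the
    normalisation.  Using [Rabs I] keeps every rate positive for all real [I],
    so the construction is continuous on the whole line. *)
Definition outflow k I := om p omega (S k) + de p d (S k) + beta (S k) * Rabs I + mu.
Definition outflow_last I := om p omega (S n') + beta (S n') * Rabs I + mu.
Fixpoint chain k I := match k with O => 1 | S k => de p d k * chain k I / outflow k I end.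
Definition chain_mass I := sum_lt (fun k => chain k I) (S n') + de p d n' * chain n' I / outflow_last I.
Definition S0_of I := (1 - Rabs I - mu / outflow_last I) / chain_mass I.
Definition eq_of I k :=
  if Nat.leb k n' then chain k I * S0_of I
  else if Nat.eqb k (S n') then (mu + de p d n' * chain n' I * S0_of I) / outflow_last I
  else Rabs I.
Definition incidence_gap I := sum_lt (fun k => beta k * eq_of I k) (S (S n')) - r - mu.

Lemma outflow_ge_mu k I : (k < n')%nat -> mu <= outflow k I.
Proof.
  intros Hk. unfold outflow.
  pose proof (om_b (S k) ltac:(lia)). pose proof (de_b (S k) ltac:(lia)). pose proof (beta_b (S k) ltac:(lia)).
  assert (0 <= beta (S k) * Rabs I) by (apply Rmult_le_pos; [lra | apply Rabs_pos]). lra.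
Qed.

Lemma outflow_last_ge_mu I : mu <= outflow_last I.
Proof.
  unfold outflow_last. pose proof (om_b (S n') ltac:(lia)). pose proof (beta_b (S n') ltac:(lia)).
  assert (0 <= beta (S n') * Rabs I) by (apply Rmult_le_pos; [lra | apply Rabs_pos]). lra.
Qed.

Lemma chain_nonneg k I : (k <= n')%nat -> 0 <= chain k I.
Proof.
  induction k as [|k IH]; intros Hk; simpl; [lra|].
  pose proof (de_b k ltac:(lia)). pose proof (outflow_ge_mu k I ltac:(lia)).
  apply Rdiv_le_0_compat; [apply Rmult_le_pos; [lra | apply IH; lia] | lra].
Qed.

Lemma chain_mass_ge_1 I : 1 <= chain_mass I.
Proof.
  unfold chain_mass. rewrite sum_lt_shift. simpl chain at 1.
  assert (0 <= sum_lt (fun i => chain (S i) I) n') by (apply sum_lt_nonneg; intros; apply chain_nonneg; lia).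
  pose proof (de_b n' ltac:(lia)). pose proof (outflow_last_ge_mu I). pose proof (chain_nonneg n' I (le_n _)).
  assert (0 <= de p d n' * chain n' I / outflow_last I) by (apply Rdiv_le_0_compat; [apply Rmult_le_pos|]; lra).
  lra.
Qed.

Lemma continuous_rate (a c : R) I : continuous (fun J => a + c * Rabs J) I.
Proof.
  apply (continuous_plus (fun _ => a)); [apply continuous_const|].
  apply (continuous_mult (fun _ => c)); [apply continuous_const | apply continuous_Rabs].
Qed.

Lemma continuous_outflow_last I : continuous outflow_last I.
Proof.
  apply (continuous_plus (fun J => om p omega (S n') + beta (S n') * Rabs J));
    [apply continuous_rate | apply continuous_const].
Qed.

Lemma continuous_chain k I : (k <= n')%nat -> continuous (chain k) I.
Proof.
  induction k as [|k IH]; intros Hk; simpl; [apply continuous_const|].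
  apply continuous_Rdiv.
  - apply (continuous_mult (fun _ => de p d k)); [apply continuous_const | apply IH; lia].
  - apply (continuous_plus (fun J => om p omega (S k) + de p d (S k) + beta (S k) * Rabs J));
      [apply continuous_rate | apply continuous_const].
  - pose proof (outflow_ge_mu k I ltac:(lia)). lra.
Qed.

Lemma continuous_S0_of I : continuous S0_of I.
Proof.
  pose proof (outflow_last_ge_mu I). pose proof (chain_mass_ge_1 I).
  unfold S0_of. apply continuous_Rdiv; [| |lra].
  - apply (continuous_minus (fun J => 1 - Rabs J)).
    + apply (continuous_minus (fun _ => 1)); [apply continuous_const | apply continuous_Rabs].
    + apply continuous_Rdiv; [apply continuous_const | apply continuous_outflow_last | lra].
  - unfold chain_mass. apply (continuous_plus (fun J => sum_lt (fun k => chain k J) (S n'))).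
    + apply (continuous_sum_lt (fun k J => chain k J)). intros; apply continuous_chain; lia.
    + apply continuous_Rdiv; [| apply continuous_outflow_last | lra].
      apply (continuous_mult (fun _ => de p d n')); [apply continuous_const | apply continuous_chain; lia].
Qed.

Lemma continuous_eq_of k I : continuous (fun J => eq_of J k) I.
Proof.
  unfold eq_of. destruct (Nat.leb k n') eqn:Hk.
  - apply (continuous_mult (chain k)); [apply continuous_chain, Nat.leb_le, Hk | apply continuous_S0_of].
  - destruct (Nat.eqb k (S n')); [|apply continuous_Rabs].
    pose proof (outflow_last_ge_mu I).
    apply continuous_Rdiv; [| apply continuous_outflow_last | lra].
    apply (continuous_plus (fun _ => mu)); [apply continuous_const|].
    apply (continuous_mult (fun J => de p d n' * chain n' J)); [|apply continuous_S0_of].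
    apply (continuous_mult (fun _ => de p d n')); [apply continuous_const | apply continuous_chain; lia].
Qed.

Lemma continuity_incidence_gap I : continuity_pt incidence_gap I.
Proof.
  apply continuity_pt_filterlim.
  assert (Hsum : continuous (fun J => sum_lt (fun k => beta k * eq_of J k) (S (S n'))) I).
  { apply (continuous_sum_lt (fun k J => beta k * eq_of J k)). intros i _.
    apply (continuous_mult (fun _ => beta i)); [apply continuous_const | apply continuous_eq_of]. }
  exact (continuous_minus _ _ I (continuous_minus _ _ I Hsum (continuous_const r I)) (continuous_const mu I)).
Qed.

Lemma eq_of_low I k : (k <= n')%nat -> eq_of I k = chain k I * S0_of I.
Proof.
  intros Hk. unfold eq_of. replace (Nat.leb k n') with true by (symmetry; apply Nat.leb_le; lia).
  reflexivity.
Qed.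

Lemma eq_of_last I : eq_of I (S n') = (mu + de p d n' * chain n' I * S0_of I) / outflow_last I.
Proof.
  unfold eq_of. replace (Nat.leb (S n') n') with false by (symmetry; apply Nat.leb_gt; lia).
  rewrite Nat.eqb_refl. reflexivity.
Qed.

Lemma eq_of_I I : eq_of I (S (S n')) = Rabs I.
Proof.
  unfold eq_of. replace (Nat.leb (S (S n')) n') with false by (symmetry; apply Nat.leb_gt; lia).
  replace (Nat.eqb (S (S n')) (S n')) with false by (symmetry; apply Nat.eqb_neq; lia). reflexivity.
Qed.

Lemma eq_of_total I : sum_lt (eq_of I) (S (S n')) = 1 - Rabs I.
Proof.
  rewrite sum_lt_S, (sum_lt_ext _ (fun k => S0_of I * chain k I)) by (intros i Hi; rewrite eq_of_low by lia; ring).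
  rewrite sum_lt_scal, eq_of_last.
  pose proof (chain_mass_ge_1 I). pose proof (outflow_last_ge_mu I).
  transitivity (S0_of I * chain_mass I + mu / outflow_last I).
  - unfold chain_mass. field. lra.
  - unfold S0_of. field. lra.
Qed.

Lemma incidence_gap_0_pos : 0 < incidence_gap 0.
Proof.
  unfold incidence_gap. rewrite sum_beta_split, eq_of_total, Rabs_R0, eq_of_last.
  pose proof (chain_mass_ge_1 0). pose proof (outflow_last_ge_mu 0).
  pose proof (chain_nonneg n' 0 (le_n _)). pose proof (de_b n' ltac:(lia)).
  assert (HS0 : 0 <= S0_of 0).
  { unfold S0_of. rewrite Rabs_R0. apply Rdiv_le_0_compat; [|lra].
    assert (mu / outflow_last 0 <= 1) by (apply Rmult_le_reg_r with (outflow_last 0); [lra|]; field_simplify; lra).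
    lra. }
  assert (Hmid : 0 <= sum_lt (fun k => (beta (S k) - beta 0%nat) * eq_of 0 (S k)) n').
  { apply sum_lt_nonneg. intros i Hi. rewrite eq_of_low by lia.
    pose proof (beta_b (S i) ltac:(lia)). pose proof (chain_nonneg (S i) 0 ltac:(lia)).
    apply Rmult_le_pos; [lra | apply Rmult_le_pos; lra]. }
  assert (Hlast : mu / outflow_last 0 <= (mu + de p d n' * chain n' 0 * S0_of 0) / outflow_last 0).
  { apply Rmult_le_compat_r; [left; apply Rinv_0_lt_compat; lra|].
    assert (0 <= de p d n' * chain n' 0 * S0_of 0) by (apply Rmult_le_pos; [apply Rmult_le_pos|]; lra). lra. }
  assert (Hthr : r + mu < beta 0%nat + (beta (S n') - beta 0%nat) * (mu / outflow_last 0)).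
  { apply Rmult_lt_reg_r with (outflow_last 0); [lra|]. field_simplify; [|lra].
    unfold outflow_last. rewrite Rabs_R0. nra. }
  assert ((beta (S n') - beta 0%nat) * (mu / outflow_last 0)
          <= (beta (S n') - beta 0%nat) * ((mu + de p d n' * chain n' 0 * S0_of 0) / outflow_last 0))
    by (apply Rmult_le_compat_l; lra).
  lra.
Qed.

Lemma incidence_gap_1_neg : incidence_gap 1 < 0.
Proof.
  unfold incidence_gap. rewrite sum_beta_split, eq_of_total, Rabs_R1, eq_of_last.
  pose proof (chain_mass_ge_1 1). pose proof (outflow_last_ge_mu 1).
  pose proof (chain_nonneg n' 1 (le_n _)). pose proof (de_b n' ltac:(lia)). pose proof (om_b (S n') ltac:(lia)).
  assert (HS0 : S0_of 1 <= 0).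
  { unfold S0_of. rewrite Rabs_R1.
    assert (0 < mu / outflow_last 1) by (apply Rdiv_lt_0_compat; lra).
    apply Rmult_le_0_r; [lra | left; apply Rinv_0_lt_compat; lra]. }
  assert (Hmid : sum_lt (fun k => (beta (S k) - beta 0%nat) * eq_of 1 (S k)) n' <= 0).
  { apply Rle_trans with (sum_lt (fun _ => 0) n'); [|rewrite sum_lt_const; lra].
    apply sum_lt_le. intros i Hi. rewrite eq_of_low by lia.
    pose proof (beta_b (S i) ltac:(lia)). pose proof (chain_nonneg (S i) 1 ltac:(lia)).
    assert (chain (S i) 1 * S0_of 1 <= 0) by (apply Rmult_le_0_l; lra).
    apply Rmult_le_0_l; lra. }
  assert (Hlast : (mu + de p d n' * chain n' 1 * S0_of 1) / outflow_last 1 <= mu / outflow_last 1).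
  { apply Rmult_le_compat_r; [left; apply Rinv_0_lt_compat; lra|].
    assert (de p d n' * chain n' 1 * S0_of 1 <= 0) by (apply Rmult_le_0_l; [apply Rmult_le_pos|]; lra). lra. }
  assert (Hsat : (beta (S n') - beta 0%nat) * (mu / outflow_last 1) < mu).
  { apply Rmult_lt_reg_r with (outflow_last 1); [lra|]. field_simplify; [|lra].
    unfold outflow_last. rewrite Rabs_R1. nra. }
  assert ((beta (S n') - beta 0%nat) * ((mu + de p d n' * chain n' 1 * S0_of 1) / outflow_last 1)
          <= (beta (S n') - beta 0%nat) * (mu / outflow_last 1))
    by (apply Rmult_le_compat_l; lra).
  lra.
Qed.

Lemma eq_of_mid_balanced I k : (k < n')%nat ->
  field (S n') d omega r mu p beta (eq_of I) (S k) = 0.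
Proof.
  intros Hk. rewrite field_mid, eq_of_I, !eq_of_low by lia. simpl chain.
  pose proof (outflow_ge_mu k I Hk). unfold outflow in *. field. lra.
Qed.

Lemma eq_of_last_balanced I : field (S n') d omega r mu p beta (eq_of I) (S n') = 0.
Proof.
  rewrite field_last, eq_of_I, eq_of_last, eq_of_low by lia.
  pose proof (outflow_last_ge_mu I). unfold outflow_last in *. field. lra.
Qed.

Lemma eq_of_I_balanced I : incidence_gap I = 0 ->
  field (S n') d omega r mu p beta (eq_of I) (S (S n')) = 0.
Proof.
  intros Hgap. unfold incidence_gap in Hgap. rewrite field_I, eq_of_I.
  replace (sum_lt (fun k => beta k * eq_of I k) (S (S n'))) with (r + mu) by lra. ring.
Qed.

(** The [S_0] equation is not checked directly: it follows from the others and
    conservation of the total population. *)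
Lemma eq_of_S0_balanced I : 0 < I -> incidence_gap I = 0 ->
  field (S n') d omega r mu p beta (eq_of I) 0%nat = 0.
Proof.
  intros HI Hgap.
  pose proof (field_total n' d omega r mu p beta (eq_of I) p0) as Htot.
  rewrite (sum_lt_S (eq_of I)), eq_of_total, eq_of_I, sum_lt_split_ends, sum_lt_S in Htot.
  rewrite (sum_lt_ext _ (fun _ => 0)) in Htot by (intros k Hk; apply eq_of_mid_balanced; exact Hk).
  rewrite sum_lt_const, eq_of_last_balanced, eq_of_I_balanced in Htot by exact Hgap.
  rewrite Rabs_pos_eq in Htot by lra. lra.
Qed.

Lemma endemic_eq_of I : 0 < I <= 1 -> incidence_gap I = 0 ->
  endemic_eq (S n') d omega r mu p beta (eq_of I).
Proof.
  intros HI Hgap. split; [|split].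
  - intros [|i] Hi; [apply eq_of_S0_balanced; lra|].
    destruct (Nat.lt_ge_cases i n') as [Hin|Hin]; [apply eq_of_mid_balanced; exact Hin|].
    destruct (Nat.eq_dec i n') as [->|Hne]; [apply eq_of_last_balanced|].
    replace (S i) with (S (S n')) by lia. apply eq_of_I_balanced, Hgap.
  - rewrite sum_f_R0_sum_lt, eq_of_total, eq_of_I. lra.
  - rewrite eq_of_I, Rabs_pos_eq; lra.
Qed.

Lemma exists_endemic : exists e, endemic_eq (S n') d omega r mu p beta e.
Proof.
  destruct (IVT (fun I => - incidence_gap I) 0 1) as [z [Hz Hgz]].
  - intros x. apply continuity_pt_opp, continuity_incidence_gap.
  - lra.
  - pose proof incidence_gap_0_pos. lra.
  - pose proof incidence_gap_1_neg. lra.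
  - assert (Hz0 : z <> 0) by (intros ->; pose proof incidence_gap_0_pos; lra).
    exists (eq_of z). apply endemic_eq_of; lra.
Qed.

End Existence.

(** * A priori bounds on endemic equilibria for small waning *)

Definition S0_bound (omega r mu : R) := 2 * (omega + r) / mu.

(** The slack in the hypothesis [(ω_n + μ)(μ + r) < β_0 ω_n + β_n μ]. *)
Definition margin n' omega r mu (p beta : nat -> R) :=
  beta 0%nat * om p omega (S n') + beta (S n') * mu - (om p omega (S n') + mu) * (mu + r).

Definition I_floor n' omega r mu (p beta : nat -> R) :=
  margin n' omega r mu p beta /
  (2 * (beta 0%nat * (om p omega (S n') + mu) + 2 * (beta (S n') - beta 0%nat) * beta (S n'))).

Section EndemicBounds.

Variables (n' : nat) (omega r mu d : R) (p beta e : nat -> R).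

Hypothesis omega_ge0 : 0 <= omega.
Hypothesis r_pos : 0 < r.
Hypothesis mu_pos : 0 < mu.
Hypothesis p0 : p 0%nat = 0.
Hypothesis p_range : forall i : nat, (1 <= i <= S n')%nat -> 0 <= p i <= 1.
Hypothesis beta0_ge0 : 0 <= beta 0%nat.
Hypothesis beta_mono : forall i : nat, (i < S n')%nat -> beta i <= beta (S i).
Hypothesis d_ge0 : 0 <= d.
Hypothesis endemic : endemic_eq (S n') d omega r mu p beta e.

Let beta_b := beta_bounds (S n') beta beta_mono.
Let om_b := om_bounds (S n') p omega omega_ge0 p_range.
Let de_b := de_bounds (S n') p d d_ge0 p0 p_range.

Local Notation I := (e (S (S n'))).
Local Notation F := (field (S n') d omega r mu p beta e).
Local Notation M0 := (S0_bound omega r mu).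

Lemma endemic_I_range : 0 < I <= 1.
Proof. apply endemic. Qed.

Lemma endemic_total : sum_lt e (S (S n')) = 1 - I.
Proof. destruct endemic as [_ [Hsum _]]. rewrite sum_f_R0_sum_lt in Hsum. lra. Qed.

Lemma endemic_force : sum_lt (fun k => beta k * e k) (S (S n')) = r + mu.
Proof.
  destruct endemic as [Heq [_ HI]].
  pose proof (Heq (S (S n')) (le_n _)) as H. rewrite field_I in H.
  assert (Hprod : I * (sum_lt (fun k => beta k * e k) (S (S n')) - r - mu) = 0) by lra.
  apply Rmult_integral in Hprod. destruct Hprod; lra.
Qed.

Lemma endemic_mid k : (k < n')%nat ->
  e (S k) * (om p omega (S k) + de p d (S k) + beta (S k) * I + mu) = de p d k * e k.
Proof. intros Hk. pose proof (proj1 endemic (S k) ltac:(lia)) as H. rewrite field_mid in H by lia. lra. Qed.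

Lemma endemic_last : e (S n') * (om p omega (S n') + beta (S n') * I + mu) = mu + de p d n' * e n'.
Proof. pose proof (proj1 endemic (S n') ltac:(lia)) as H. rewrite field_last in H. lra. Qed.

Lemma endemic_mid_contract k : (k < n')%nat -> mu * Rabs (e (S k)) <= d * Rabs (e k).
Proof.
  intros Hk. pose proof (endemic_mid k Hk) as Hmid. pose proof endemic_I_range.
  pose proof (om_b (S k) ltac:(lia)). pose proof (de_b (S k) ltac:(lia)). pose proof (de_b k ltac:(lia)).
  pose proof (beta_b (S k) ltac:(lia)).
  set (D := om p omega (S k) + de p d (S k) + beta (S k) * I + mu) in *.
  assert (HD : mu <= D) by (assert (0 <= beta (S k) * I) by (apply Rmult_le_pos; lra); unfold D; lra).
  assert (Habs : Rabs (e (S k)) * D = de p d k * Rabs (e k)).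
  { rewrite <- (Rabs_pos_eq D), <- (Rabs_pos_eq (de p d k)), <- !Rabs_mult, Hmid by lra. reflexivity. }
  pose proof (Rabs_pos (e (S k))). pose proof (Rabs_pos (e k)). nra.
Qed.

Hypothesis d_le_mu : d <= mu.

Lemma endemic_le_S0 k : (k <= n')%nat -> Rabs (e k) <= Rabs (e 0%nat).
Proof.
  induction k as [|k IH]; intros Hk; [lra|].
  pose proof (endemic_mid_contract k ltac:(lia)). specialize (IH ltac:(lia)).
  pose proof (Rabs_pos (e k)). nra.
Qed.

Lemma endemic_mid_small k : (k < n')%nat -> mu * Rabs (e (S k)) <= d * Rabs (e 0%nat).
Proof.
  intros Hk. pose proof (endemic_mid_contract k Hk). pose proof (endemic_le_S0 k ltac:(lia)). nra.
Qed.

Lemma endemic_last_bound : mu * Rabs (e (S n')) <= mu + d * Rabs (e 0%nat).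
Proof.
  pose proof endemic_I_range. pose proof (om_b (S n') ltac:(lia)). pose proof (de_b n' ltac:(lia)).
  pose proof (beta_b (S n') ltac:(lia)).
  set (D := om p omega (S n') + beta (S n') * I + mu).
  assert (HD : mu <= D) by (assert (0 <= beta (S n') * I) by (apply Rmult_le_pos; lra); unfold D; lra).
  assert (Habs : Rabs (e (S n')) * D = Rabs (mu + de p d n' * e n')).
  { rewrite <- endemic_last. fold D. rewrite Rabs_mult, (Rabs_pos_eq D) by lra. reflexivity. }
  assert (Rabs (mu + de p d n' * e n') <= mu + d * Rabs (e 0%nat)).
  { eapply Rle_trans; [apply Rabs_triang|]. rewrite Rabs_pos_eq, Rabs_mult, (Rabs_pos_eq (de p d n')) by lra.
    pose proof (endemic_le_S0 n' (le_n _)). pose proof (Rabs_pos (e n')). nra. }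
  pose proof (Rabs_pos (e (S n'))). nra.
Qed.

Hypothesis d_small_S0 : d * omega * INR (S n') <= mu^2 / 2.

(** From the [S_0] equation, [μ^2 |S_0| <= (n'+1) ω δ |S_0| + μ (ω + r)]. *)
Lemma endemic_S0_bound : Rabs (e 0%nat) <= M0.
Proof.
  pose proof (proj1 endemic 0%nat ltac:(lia)) as H. rewrite field_S0, sum_lt_S in H.
  pose proof endemic_I_range. pose proof (om_b (S n') ltac:(lia)).
  set (Sm := sum_lt (fun k => om p omega (S k) * e (S k)) n') in *.
  assert (HSm : mu * Rabs Sm <= INR n' * omega * d * Rabs (e 0%nat)).
  { unfold Sm. rewrite <- (Rabs_pos_eq mu) at 1 by lra. rewrite <- Rabs_mult, <- sum_lt_scal.
    eapply Rle_trans; [apply Rabs_sum_lt|].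
    replace (INR n' * omega * d * Rabs (e 0%nat)) with (sum_lt (fun _ => omega * (d * Rabs (e 0%nat))) n')
      by (rewrite sum_lt_const; ring).
    apply sum_lt_le. intros i Hi.
    pose proof (endemic_mid_small i Hi). pose proof (om_b (S i) ltac:(lia)). pose proof (Rabs_pos (e (S i))).
    rewrite !Rabs_mult, (Rabs_pos_eq mu), (Rabs_pos_eq (om p omega (S i))) by lra.
    assert (0 <= d * Rabs (e 0%nat)) by (apply Rmult_le_pos; [lra | apply Rabs_pos]). nra. }
  assert (Habs : Rabs (e 0%nat) * (d + beta 0%nat * I + mu) <= Rabs Sm + omega * Rabs (e (S n')) + r).
  { assert (0 <= beta 0%nat * I) by (apply Rmult_le_pos; lra).
    rewrite <- (Rabs_pos_eq (d + beta 0%nat * I + mu)) by lra.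
    replace (e 0%nat * (d + beta 0%nat * I + mu)) with (Sm + om p omega (S n') * e (S n') + r * I) by lra.
    rewrite <- Rabs_mult.
    replace (e 0%nat * (d + beta 0%nat * I + mu)) with (Sm + om p omega (S n') * e (S n') + r * I) by lra.
    eapply Rle_trans; [apply Rabs_triang|]. eapply Rle_trans; [apply Rplus_le_compat_r, Rabs_triang|].
    rewrite !Rabs_mult, (Rabs_pos_eq (om _ _ _)), (Rabs_pos_eq r), (Rabs_pos_eq I) by lra.
    pose proof (Rabs_pos (e (S n'))). nra. }
  pose proof endemic_last_bound. pose proof (Rabs_pos (e 0%nat)). pose proof (Rabs_pos (e (S n'))).
  assert (0 <= beta 0%nat * I) by (apply Rmult_le_pos; lra).
  rewrite S_INR in d_small_S0.
  assert (mu * (Rabs (e 0%nat) * (d + beta 0%nat * I + mu)) <= mu * (Rabs Sm + omega * Rabs (e (S n')) + r))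
    by (apply Rmult_le_compat_l; lra).
  assert (omega * (mu * Rabs (e (S n'))) <= omega * (mu + d * Rabs (e 0%nat))) by (apply Rmult_le_compat_l; lra).
  assert (0 <= mu * (Rabs (e 0%nat) * (d + beta 0%nat * I))) by (apply Rmult_le_pos; [lra | apply Rmult_le_pos; lra]).
  assert (mu * (mu * Rabs (e 0%nat)) <= (INR n' + 1) * omega * d * Rabs (e 0%nat) + mu * (omega + r)) by nra.
  unfold S0_bound. apply Rmult_le_reg_l with (mu * mu / 2); [nra|]. field_simplify; [|lra]. nra.
Qed.

Hypothesis d_small_last : d * M0 <= mu / 2.

Lemma endemic_inflow_last : Rabs (de p d n' * e n') <= mu / 2.
Proof.
  pose proof (de_b n' ltac:(lia)). pose proof (endemic_le_S0 n' (le_n _)). pose proof endemic_S0_bound.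
  pose proof (Rabs_pos (e n')).
  rewrite Rabs_mult, (Rabs_pos_eq (de p d n')) by lra.
  apply Rle_trans with (d * M0); [|exact d_small_last]. nra.
Qed.

Lemma endemic_last_range : 0 < e (S n') <= 2.
Proof.
  pose proof endemic_last as Hl. pose proof endemic_inflow_last as Hin. apply Rabs_le_between in Hin.
  pose proof endemic_I_range. pose proof (om_b (S n') ltac:(lia)). pose proof (beta_b (S n') ltac:(lia)).
  assert (0 <= beta (S n') * I) by (apply Rmult_le_pos; lra).
  split; nra.
Qed.

Lemma endemic_last_lower : mu <= 2 * e (S n') * (om p omega (S n') + beta (S n') + mu).
Proof.
  pose proof endemic_last as Hl. pose proof endemic_inflow_last as Hin. apply Rabs_le_between in Hin.
  pose proof endemic_I_range. pose proof endemic_last_range. pose proof (beta_b (S n') ltac:(lia)).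
  assert (beta (S n') * I <= beta (S n')) by nra. nra.
Qed.

Lemma endemic_mid_force_bound :
  Rabs (mu * sum_lt (fun k => (beta (S k) - beta 0%nat) * e (S k)) n') <= INR n' * beta (S n') * d * M0.
Proof.
  pose proof endemic_S0_bound.
  rewrite <- sum_lt_scal. eapply Rle_trans; [apply Rabs_sum_lt|].
  replace (INR n' * beta (S n') * d * M0) with (sum_lt (fun _ => beta (S n') * (d * M0)) n')
    by (rewrite sum_lt_const; ring).
  apply sum_lt_le. intros i Hi.
  pose proof (beta_b (S i) ltac:(lia)). pose proof (endemic_mid_small i Hi). pose proof (Rabs_pos (e (S i))).
  rewrite !Rabs_mult, (Rabs_pos_eq mu), (Rabs_pos_eq (beta (S i) - beta 0%nat)) by lra.
  assert (mu * Rabs (e (S i)) <= d * M0)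
    by (apply Rle_trans with (d * Rabs (e 0%nat)); [lra | apply Rmult_le_compat_l; lra]).
  assert (0 <= d * M0) by (apply Rmult_le_pos; [lra | apply Rle_trans with (Rabs (e 0%nat)); [apply Rabs_pos | lra]]).
  nra.
Qed.

(** The force-of-infection identity [Σ β_k S_k = r + μ], multiplied by
    [(ω_n + μ) μ] and combined with the [S_n] equation. *)
Lemma endemic_margin_le : beta 0%nat < beta (S n') ->
  mu * margin n' omega r mu p beta
  <= mu * I * (beta 0%nat * (om p omega (S n') + mu) + 2 * (beta (S n') - beta 0%nat) * beta (S n'))
     + d * M0 * ((om p omega (S n') + mu) * INR n' * beta (S n') + mu * (beta (S n') - beta 0%nat)).
Proof.
  intros Hbn.
  pose proof endemic_I_range. pose proof endemic_last_range. pose proof endemic_S0_bound.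
  pose proof (om_b (S n') ltac:(lia)). pose proof (de_b n' ltac:(lia)).
  set (D0 := om p omega (S n') + mu) in *.
  set (g := beta (S n') - beta 0%nat) in *.
  set (bn := beta (S n')) in *.
  assert (Hg : 0 < g) by (unfold g; lra).
  assert (HD0 : 0 < D0) by (unfold D0; lra).
  set (Mid := sum_lt (fun k => (beta (S k) - beta 0%nat) * e (S k)) n').
  pose proof endemic_mid_force_bound as HMid. fold bn Mid in HMid. apply Rabs_le_between in HMid.
  assert (Hin : Rabs (de p d n' * e n') <= d * M0).
  { rewrite Rabs_mult, (Rabs_pos_eq (de p d n')) by lra.
    pose proof (endemic_le_S0 n' (le_n _)). pose proof (Rabs_pos (e n')). nra. }
  apply Rabs_le_between in Hin.
  assert (Hforce : r + mu = beta 0%nat * (1 - I) + Mid + g * e (S n'))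
    by (rewrite <- endemic_force, sum_beta_split, endemic_total; reflexivity).
  assert (Hlast : e (S n') * D0 = mu + de p d n' * e n' - bn * I * e (S n'))
    by (pose proof endemic_last as Hl; unfold D0, bn in *; rewrite <- Hl; ring).
  replace (margin n' omega r mu p beta) with (beta 0%nat * D0 + g * mu - D0 * (mu + r))
    by (unfold margin, D0, g, bn; ring).
  assert (Hexp : mu * D0 * (r + mu)
                 = mu * D0 * beta 0%nat * (1 - I) + D0 * (mu * Mid) + mu * g * (e (S n') * D0))
    by (rewrite Hforce; ring).
  rewrite Hlast in Hexp.
  assert (D0 * (mu * Mid) >= - (D0 * (INR n' * bn * d * M0))) by nra.
  assert (mu * g * (bn * I * e (S n')) <= mu * g * (bn * I * 2))
    by (apply Rmult_le_compat_l; [nra|]; apply Rmult_le_compat_l; [nra | lra]).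
  assert (Hmg : 0 <= mu * g) by nra.
  assert (mu * g * (de p d n' * e n') >= - (mu * g * (d * M0))) by nra.
  nra.
Qed.

Lemma endemic_I_lower : beta 0%nat < beta (S n') ->
  d * M0 * ((om p omega (S n') + mu) * INR n' * beta (S n') + mu * (beta (S n') - beta 0%nat))
    <= mu * margin n' omega r mu p beta / 2 ->
  I_floor n' omega r mu p beta <= I.
Proof.
  intros Hbn Hsmall. pose proof (endemic_margin_le Hbn) as Hkey.
  pose proof (om_b (S n') ltac:(lia)).
  set (den := beta 0%nat * (om p omega (S n') + mu) + 2 * (beta (S n') - beta 0%nat) * beta (S n')) in *.
  assert (Hden : 0 < den) by (unfold den; nra).
  unfold I_floor. fold den.
  apply Rmult_le_reg_l with (2 * den); [lra|].
  replace (2 * den * (margin n' omega r mu p beta / (2 * den))) with (margin n' omega r mu p beta) by (field; lra).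
  apply Rmult_le_reg_l with mu; lra.
Qed.

End EndemicBounds.

(** * The Lyapunov function *)

Section LyapunovFunction.

Variables (n' : nat) (e : nat -> R) (b c L K eps : R).

Definition dev (x : nat -> R) k := x k - e k.

Definition lyap (x : nat -> R) :=
  L * (sum_lt (dev x) (S (S (S n'))))^2 + K * sum_lt (fun k => (dev x (S k))^2) n'
  + c * (dev x (S n'))^2 + b * (dev x (S (S n')))^2 + 2 * eps * dev x (S n') * dev x (S (S n')).

Definition lyap_rate (F : nat -> R) (x : nat -> R) :=
  2 * L * sum_lt (dev x) (S (S (S n'))) * sum_lt F (S (S (S n')))
  + K * sum_lt (fun k => 2 * dev x (S k) * F (S k)) n'
  + (2 * c * dev x (S n') + 2 * eps * dev x (S (S n'))) * F (S n')
  + (2 * b * dev x (S (S n')) + 2 * eps * dev x (S n')) * F (S (S n')).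

Definition lyap_norm2 (x : nat -> R) :=
  (sum_lt (dev x) (S (S (S n'))))^2 + sum_lt (fun k => (dev x (S k))^2) n'
  + (dev x (S n'))^2 + (dev x (S (S n')))^2.

Definition dev_norm2 (x : nat -> R) := sum_lt (fun k => (dev x k)^2) (S (S (S n'))).

Lemma lyap_derive (F : (nat -> R) -> nat -> R) (x : R -> nat -> R) t :
  (forall i, (i <= S (S n'))%nat -> is_derive (fun s => x s i) t (F (x t) i)) ->
  is_derive (fun s => lyap (x s)) t (lyap_rate (F (x t)) (x t)).
Proof.
  intros Hx.
  assert (Hy : forall i, (i <= S (S n'))%nat -> is_derive (fun s => dev (x s) i) t (F (x t) i))
    by (intros i Hi; apply is_derive_Rminus_const, Hx, Hi).
  unfold lyap, lyap_rate.
  match goal with |- is_derive _ _ ?l => replace l with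
    (L * (2 * sum_lt (dev (x t)) (S (S (S n'))) * sum_lt (F (x t)) (S (S (S n'))))
     + K * sum_lt (fun k => 2 * dev (x t) (S k) * F (x t) (S k)) n'
     + c * (2 * dev (x t) (S n') * F (x t) (S n'))
     + b * (2 * dev (x t) (S (S n')) * F (x t) (S (S n')))
     + ((2 * eps * F (x t) (S n')) * dev (x t) (S (S n')) + 2 * eps * dev (x t) (S n') * F (x t) (S (S n'))))
    by ring end.
  apply is_derive_Rplus; [apply is_derive_Rplus; [apply is_derive_Rplus; [apply is_derive_Rplus|]|]|].
  - apply is_derive_Rscal, is_derive_Rsq, (is_derive_sum_lt (fun s k => dev (x s) k)).
    intros i Hi. apply Hy. lia.
  - apply is_derive_Rscal.
    apply (is_derive_sum_lt (fun s k => (dev (x s) (S k))^2) (fun k => 2 * dev (x t) (S k) * F (x t) (S k))).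
    intros i Hi. apply is_derive_Rsq, Hy. lia.
  - apply is_derive_Rscal, is_derive_Rsq, Hy. lia.
  - apply is_derive_Rscal, is_derive_Rsq, Hy. lia.
  - apply (is_derive_Rmult (fun s => 2 * eps * dev (x s) (S n')) (fun s => dev (x s) (S (S n'))));
      [apply is_derive_Rscal, Hy; lia | apply Hy; lia].
Qed.

Lemma mid_norm2_nonneg x : 0 <= sum_lt (fun k => (dev x (S k))^2) n'.
Proof. apply sum_lt_nonneg. intros; apply pow2_ge_0. Qed.

Lemma lyap_norm2_nonneg x : 0 <= lyap_norm2 x.
Proof.
  unfold lyap_norm2. pose proof (mid_norm2_nonneg x).
  pose proof (pow2_ge_0 (sum_lt (dev x) (S (S (S n'))))).
  pose proof (pow2_ge_0 (dev x (S n'))). pose proof (pow2_ge_0 (dev x (S (S n')))). lra.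
Qed.

(** [y_0] is recovered from [Σ y]; Cauchy-Schwarz bounds the rest of the sum. *)
Lemma dev_sq_le_lyap_norm2 x k : (k <= S (S n'))%nat -> (dev x k)^2 <= 3 * (INR n' + 2) * lyap_norm2 x.
Proof.
  intros Hk. pose proof (lyap_norm2_nonneg x) as HU. unfold lyap_norm2 in *.
  set (w := sum_lt (dev x) (S (S (S n')))) in *.
  set (Mid := sum_lt (fun k => (dev x (S k))^2) n') in *.
  pose proof (mid_norm2_nonneg x). fold Mid in H.
  pose proof (pow2_ge_0 w). pose proof (pow2_ge_0 (dev x (S n'))). pose proof (pow2_ge_0 (dev x (S (S n')))).
  pose proof (pos_INR n').
  destruct k as [|k].
  - set (Sm := sum_lt (fun i => dev x (S i)) (S n')).
    assert (Hw : dev x 0%nat = w + - Sm + - dev x (S (S n'))).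
    { unfold w, Sm. rewrite sum_lt_shift, (sum_lt_S (fun i => dev x (S i)) (S n')). ring. }
    assert (Hcs : Sm^2 <= INR (S n') * (Mid + (dev x (S n'))^2)) by apply (sum_lt_sq_le (fun i => dev x (S i))).
    rewrite S_INR in Hcs.
    pose proof (sq_sum3_le w (- Sm) (- dev x (S (S n')))) as H3sq. rewrite <- Hw in H3sq.
    replace ((- Sm)^2) with (Sm^2) in H3sq by ring.
    replace ((- dev x (S (S n')))^2) with ((dev x (S (S n')))^2) in H3sq by ring.
    assert (Sm^2 <= (INR n' + 1) * (Mid + (dev x (S n'))^2 + w^2 + (dev x (S (S n')))^2)) by nra.
    nra.
  - destruct (Nat.lt_ge_cases k n') as [Hkn|Hkn].
    + assert ((dev x (S k))^2 <= Mid)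
        by (apply (sum_lt_term_le (fun k => (dev x (S k))^2)); auto; intros; apply pow2_ge_0).
      nra.
    + destruct (Nat.eq_dec k n') as [->|Hne]; [nra|].
      replace (S k) with (S (S n')) by lia. nra.
Qed.

Lemma dev_norm2_le_lyap_norm2 x : dev_norm2 x <= INR (S (S (S n'))) * (3 * (INR n' + 2) * lyap_norm2 x).
Proof.
  unfold dev_norm2. rewrite <- sum_lt_const. apply sum_lt_le. intros i Hi. apply dev_sq_le_lyap_norm2. lia.
Qed.

Lemma dev_sq_le_norm2 x k : (k <= S (S n'))%nat -> (dev x k)^2 <= dev_norm2 x.
Proof. intros Hk. apply (sum_lt_term_le (fun k => (dev x k)^2)); [intros; apply pow2_ge_0 | lia]. Qed.

Lemma mid_norm2_le_norm2 x : sum_lt (fun k => (dev x (S k))^2) n' <= dev_norm2 x.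
Proof.
  unfold dev_norm2. rewrite sum_lt_shift. pose proof (pow2_ge_0 (dev x 0%nat)).
  assert (sum_lt (fun k => (dev x (S k))^2) n' <= sum_lt (fun k => (dev x (S k))^2) (S (S n')))
    by (apply sum_lt_prefix_le; [lia | intros; apply pow2_ge_0]).
  lra.
Qed.

Lemma low_norm2_le_norm2 x : sum_lt (fun k => (dev x k)^2) n' <= dev_norm2 x.
Proof. apply sum_lt_prefix_le; [lia | intros; apply pow2_ge_0]. Qed.

Lemma lyap_norm2_le_close x r0 : 0 <= r0 -> Defs.close (S (S n')) r0 x e ->
  lyap_norm2 x <= ((INR (S (S (S n'))))^2 + INR n' + 2) * r0^2.
Proof.
  intros Hr0 Hcl.
  assert (Hy : forall k, (k <= S (S n'))%nat -> (dev x k)^2 <= r0^2)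
    by (intros k Hk; apply pow_maj_Rabs; left; apply Hcl, Hk).
  assert (Hw : (sum_lt (dev x) (S (S (S n'))))^2 <= (INR (S (S (S n'))))^2 * r0^2).
  { rewrite <- Rpow_mult_distr. apply pow_maj_Rabs.
    eapply Rle_trans; [apply Rabs_sum_lt|]. rewrite <- sum_lt_const.
    apply sum_lt_le. intros i Hi. left. apply Hcl. lia. }
  assert (HMid : sum_lt (fun k => (dev x (S k))^2) n' <= INR n' * r0^2).
  { rewrite <- sum_lt_const. apply sum_lt_le. intros i Hi. apply Hy. lia. }
  pose proof (Hy (S n') ltac:(lia)). pose proof (Hy (S (S n')) ltac:(lia)).
  unfold lyap_norm2. lra.
Qed.

Hypothesis L_ge1 : 1 <= L.
Hypothesis K_ge1 : 1 <= K.
Hypothesis eps_ge0 : 0 <= eps.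
Hypothesis eps_le_c : eps <= c / 2.
Hypothesis eps_le_b : eps <= b / 2.

Lemma lyap_lower x : Rmin 1 (Rmin (c / 2) (b / 2)) * lyap_norm2 x <= lyap x.
Proof.
  unfold lyap, lyap_norm2.
  set (w := sum_lt (dev x) (S (S (S n')))).
  set (Mid := sum_lt (fun k => (dev x (S k))^2) n').
  pose proof (mid_norm2_nonneg x) as HM. fold Mid in HM.
  set (m0 := Rmin 1 (Rmin (c / 2) (b / 2))).
  assert (Hm1 : m0 <= 1) by apply Rmin_l.
  assert (Hm2 : m0 <= c / 2) by (eapply Rle_trans; [apply Rmin_r | apply Rmin_l]).
  assert (Hm3 : m0 <= b / 2) by (eapply Rle_trans; [apply Rmin_r | apply Rmin_r]).
  set (u := dev x (S n')). set (v := dev x (S (S n'))).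
  assert (Hcross : 2 * eps * u * v >= - (c / 2 * u^2 + b / 2 * v^2)).
  { assert (0 <= eps * (u + v)^2) by (apply Rmult_le_pos; [lra | apply pow2_ge_0]).
    assert (0 <= (c / 2 - eps) * u^2) by (apply Rmult_le_pos; [lra | apply pow2_ge_0]).
    assert (0 <= (b / 2 - eps) * v^2) by (apply Rmult_le_pos; [lra | apply pow2_ge_0]).
    nra. }
  assert (m0 * w^2 <= L * w^2) by (apply Rmult_le_compat_r; [apply pow2_ge_0 | lra]).
  assert (m0 * Mid <= K * Mid) by (apply Rmult_le_compat_r; lra).
  assert (m0 * u^2 <= c / 2 * u^2) by (apply Rmult_le_compat_r; [apply pow2_ge_0 | lra]).
  assert (m0 * v^2 <= b / 2 * v^2) by (apply Rmult_le_compat_r; [apply pow2_ge_0 | lra]).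
  lra.
Qed.

Lemma lyap_coercive x i : (i <= S (S n'))%nat ->
  Rmin 1 (Rmin (c / 2) (b / 2)) / (3 * (INR n' + 2)) * (x i - e i)^2 <= lyap x.
Proof.
  intros Hi. pose proof (dev_sq_le_lyap_norm2 x i Hi) as Hdev. pose proof (lyap_lower x) as Hlow.
  pose proof (pos_INR n').
  assert (Hm : 0 <= Rmin 1 (Rmin (c / 2) (b / 2))) by (apply Rmin_glb; [lra | apply Rmin_glb; lra]).
  apply Rle_trans with (Rmin 1 (Rmin (c / 2) (b / 2)) * lyap_norm2 x); [|exact Hlow].
  replace (Rmin 1 (Rmin (c / 2) (b / 2)) / (3 * (INR n' + 2)) * (x i - e i)^2)
    with (Rmin 1 (Rmin (c / 2) (b / 2)) * ((dev x i)^2 / (3 * (INR n' + 2)))) by (unfold dev; field; lra).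
  apply Rmult_le_compat_l; [exact Hm|].
  apply Rmult_le_reg_r with (3 * (INR n' + 2)); [lra|].
  replace ((dev x i)^2 / (3 * (INR n' + 2)) * (3 * (INR n' + 2))) with ((dev x i)^2) by (field; lra). lra.
Qed.

Lemma lyap_upper x : lyap x <= (L + K + c + b + eps) * lyap_norm2 x.
Proof.
  unfold lyap, lyap_norm2.
  set (w := sum_lt (dev x) (S (S (S n')))).
  set (Mid := sum_lt (fun k => (dev x (S k))^2) n').
  pose proof (mid_norm2_nonneg x) as HM. fold Mid in HM.
  set (u := dev x (S n')). set (v := dev x (S (S n'))).
  assert (2 * eps * u * v <= eps * (u^2 + v^2)) by (pose proof (pow2_ge_0 (u - v)); nra).
  pose proof (pow2_ge_0 w). pose proof (pow2_ge_0 u). pose proof (pow2_ge_0 v).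
  assert (L * w^2 <= (L + K + c + b + eps) * w^2) by (apply Rmult_le_compat_r; lra).
  assert (K * Mid <= (L + K + c + b + eps) * Mid) by (apply Rmult_le_compat_r; lra).
  assert (c * u^2 + eps * u^2 <= (L + K + c + b + eps) * u^2) by nra.
  assert (b * v^2 + eps * v^2 <= (L + K + c + b + eps) * v^2) by nra.
  lra.
Qed.

End LyapunovFunction.

(** * Decay of the Lyapunov function near an endemic equilibrium *)

Section RateBound.

Variables (n' : nat) (omega r mu d : R) (p beta e : nat -> R).

Hypothesis omega_ge0 : 0 <= omega.
Hypothesis mu_pos : 0 < mu.
Hypothesis p0 : p 0%nat = 0.
Hypothesis p_range : forall i : nat, (1 <= i <= S n')%nat -> 0 <= p i <= 1.
Hypothesis beta0_ge0 : 0 <= beta 0%nat.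
Hypothesis beta_mono : forall i : nat, (i < S n')%nat -> beta i <= beta (S i).
Hypothesis beta0_lt : beta 0%nat < beta (S n').
Hypothesis d_ge0 : 0 <= d.
Hypothesis endemic : endemic_eq (S n') d omega r mu p beta e.

Let beta_b := beta_bounds (S n') beta beta_mono.
Let om_b := om_bounds (S n') p omega omega_ge0 p_range.
Let de_b := de_bounds (S n') p d d_ge0 p0 p_range.
Let I_range := endemic_I_range n' omega r mu d p beta e endemic.

Local Notation F := (field (S n') d omega r mu p beta).
Local Notation y := (dev e).
Local Notation eI := (e (S (S n'))).
Local Notation bn := (beta (S n')).
Local Notation g := (beta (S n') - beta 0%nat).
Local Notation b := (beta (S n') * e (S n')).
Local Notation c := ((beta (S n') - beta 0%nat) * e (S (S n'))).

Lemma rate_total x : sum_lt (F x) (S (S (S n'))) = - mu * sum_lt (y x) (S (S (S n'))).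
Proof.
  rewrite field_total by exact p0. unfold dev.
  rewrite sum_lt_minus, (sum_lt_S e (S (S n'))), (endemic_total _ _ _ _ _ _ _ _ endemic). ring.
Qed.

Lemma rate_I x : F x (S (S n')) = x (S (S n')) * sum_lt (fun k => beta k * y x k) (S (S n')).
Proof.
  rewrite field_I. unfold dev.
  rewrite (sum_lt_ext (fun k => beta k * (x k - e k)) (fun k => beta k * x k - beta k * e k)) by (intros; ring).
  rewrite sum_lt_minus, (endemic_force _ _ _ _ _ _ _ _ endemic). ring.
Qed.

Lemma rate_last x : F x (S n') =
  - (om p omega (S n') + mu + bn * eI) * y x (S n') - b * y x (S (S n'))
  + de p d n' * y x n' - bn * y x (S (S n')) * y x (S n').
Proof.
  pose proof (proj1 endemic (S n') ltac:(lia)) as He. rewrite field_last in *. unfold dev. lra.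
Qed.

Lemma rate_mid x k : (k < n')%nat -> F x (S k) =
  - (om p omega (S k) + de p d (S k) + mu + beta (S k) * eI) * y x (S k)
  + de p d k * y x k - beta (S k) * e (S k) * y x (S (S n')) - beta (S k) * y x (S (S n')) * y x (S k).
Proof.
  intros Hk. pose proof (proj1 endemic (S k) ltac:(lia)) as He. rewrite field_mid in * by exact Hk.
  unfold dev. lra.
Qed.

Variable E : R.
Hypothesis E_ge0 : 0 <= E.
Hypothesis mid_small : forall k, (k < n')%nat -> Rabs (e (S k)) <= d * E.

Lemma mid_term_bound x k rho : (k < n')%nat -> Rabs (y x (S (S n'))) <= rho ->
  2 * y x (S k) * F x (S k)
  <= -2 * mu * (y x (S k))^2 + d * ((y x k)^2 + (y x (S k))^2)
     + bn * (d * E) * ((y x (S k))^2 + (y x (S (S n')))^2) + 2 * bn * rho * (y x (S k))^2.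
Proof.
  intros Hk HyI. rewrite rate_mid by exact Hk.
  pose proof (om_b (S k) ltac:(lia)). pose proof (de_b (S k) ltac:(lia)). pose proof (de_b k ltac:(lia)).
  pose proof (beta_b (S k) ltac:(lia)). pose proof (mid_small k Hk).
  set (u := y x (S k)). set (v := y x k). set (z := y x (S (S n'))) in *.
  assert (Hdamp : 2 * u * (- (om p omega (S k) + de p d (S k) + mu + beta (S k) * eI) * u) <= -2 * mu * u^2).
  { assert (0 <= beta (S k) * eI) by (apply Rmult_le_pos; lra). pose proof (pow2_ge_0 u). nra. }
  assert (Hin : (2 * de p d k) * u * v <= d * (v^2 + u^2)).
  { pose proof (young_Rabs (2 * de p d k) u v (2 * d) ltac:(rewrite Rabs_pos_eq; lra)). nra. }
  assert (Hforce : (2 * beta (S k) * e (S k)) * u * (- z) <= bn * (d * E) * (u^2 + z^2)).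
  { assert (Hs : Rabs (2 * beta (S k) * e (S k)) <= 2 * (bn * (d * E))).
    { rewrite !Rabs_mult, (Rabs_pos_eq 2), (Rabs_pos_eq (beta (S k))) by lra.
      assert (beta (S k) * Rabs (e (S k)) <= bn * (d * E)) by (apply Rmult_le_compat; try apply Rabs_pos; lra).
      lra. }
    pose proof (young_Rabs _ u (- z) _ Hs) as Hy. replace ((- z)^2) with (z^2) in Hy by ring. lra. }
  assert (Hcubic : - 2 * beta (S k) * z * u^2 <= 2 * bn * rho * u^2).
  { apply Rabs_le_between in HyI. pose proof (pow2_ge_0 u).
    assert (- beta (S k) * z <= bn * rho) by nra. nra. }
  lra.
Qed.

Lemma mid_rate_bound x rho : Rabs (y x (S (S n'))) <= rho ->
  sum_lt (fun k => 2 * y x (S k) * F x (S k)) n'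
  <= -2 * mu * sum_lt (fun k => (y x (S k))^2) n'
     + (d * (2 + bn * E * (1 + INR n')) + 2 * bn * rho) * dev_norm2 n' e x.
Proof.
  intros HyI.
  eapply Rle_trans; [apply sum_lt_le; intros k Hk; apply (mid_term_bound x k rho Hk HyI)|].
  rewrite !sum_lt_plus, !sum_lt_scal, !sum_lt_plus, (sum_lt_const ((y x (S (S n')))^2)).
  pose proof (mid_norm2_le_norm2 n' e x). pose proof (low_norm2_le_norm2 n' e x).
  pose proof (mid_norm2_nonneg n' e x). pose proof (dev_sq_le_norm2 n' e x (S (S n')) ltac:(lia)).
  pose proof (pos_INR n'). pose proof (Rabs_pos (y x (S (S n')))).
  set (T := dev_norm2 n' e x) in *.
  set (Mid := sum_lt (fun k => (y x (S k))^2) n') in *.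
  set (Low := sum_lt (fun k => (y x k)^2) n') in *.
  assert (HdE : 0 <= bn * (d * E)) by (apply Rmult_le_pos; [lra | apply Rmult_le_pos; lra]).
  assert (d * (Low + Mid) <= d * (2 * T)) by (apply Rmult_le_compat_l; lra).
  assert (bn * (d * E) * (Mid + INR n' * (y x (S (S n')))^2) <= bn * (d * E) * ((1 + INR n') * T))
    by (apply Rmult_le_compat_l; [lra | nra]).
  assert (2 * bn * rho * Mid <= 2 * bn * rho * T) by (apply Rmult_le_compat_l; [apply Rmult_le_pos; lra | lra]).
  lra.
Qed.

Variables (eps lam c0 b0 : R).
Hypothesis c0_pos : 0 < c0.
Hypothesis c0_le : c0 <= c.
Hypothesis b0_pos : 0 < b0.
Hypothesis b0_le : b0 <= b.
Hypothesis last_range : 0 <= e (S n') <= 2.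
Hypothesis eps_pos : 0 < eps.
Hypothesis eps_le_mu : eps <= mu / 2.
Hypothesis eps_coupling : eps * (omega + mu + bn + beta 0%nat)^2 <= mu * c0 * b0 / 2.
Hypothesis lam_pos : 0 < lam.

(** The [(y_n, y_I)] block of the linearisation.  The cross terms
    [± 2 b c y_n y_I] cancel exactly, and the small [ε y_n y_I] term of the
    Lyapunov function turns [-2 ε b y_I^2] into a definite sign. *)
Lemma block_rate_bound yn yI :
  (2 * c * yn + 2 * eps * yI) * (- (om p omega (S n') + mu + bn * eI) * yn - b * yI)
  + (2 * b * yI + 2 * eps * yn) * (eI * (- beta 0%nat * yI + g * yn))
  <= - (mu * c0 / 2) * yn^2 - eps * b0 * yI^2.
Proof.
  pose proof (om_b (S n') ltac:(lia)).
  set (a := om p omega (S n') + mu + bn * eI).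
  set (P := - (2 * a * c - 2 * eps * c) + mu * c0 / 2).
  set (Q := - (2 * eps * b + 2 * b * (beta 0%nat * eI)) + eps * b0).
  set (S := - eps * (a + beta 0%nat * eI)).
  assert (Hid : (2 * c * yn + 2 * eps * yI) * (- a * yn - b * yI)
                + (2 * b * yI + 2 * eps * yn) * (eI * (- beta 0%nat * yI + g * yn))
                - (- (mu * c0 / 2) * yn^2 - eps * b0 * yI^2) = P * yn^2 + Q * yI^2 + 2 * S * yn * yI)
    by (unfold P, Q, S; ring).
  assert (Hb0 : 0 <= beta 0%nat * eI) by (apply Rmult_le_pos; lra).
  assert (Ha : mu <= a) by (assert (0 <= bn * eI) by (apply Rmult_le_pos; lra); unfold a; lra).
  assert (Ha1 : 0 <= a + beta 0%nat * eI <= omega + mu + bn + beta 0%nat) by (unfold a; nra).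
  assert (HP : P <= - (mu * c0 / 2)) by (unfold P; nra).
  assert (HQ : Q <= - (eps * b)) by (assert (0 <= b * (beta 0%nat * eI)) by nra; unfold Q; nra).
  assert (HS : S^2 <= P * Q).
  { assert (S^2 <= eps^2 * (omega + mu + bn + beta 0%nat)^2).
    { replace (S^2) with (eps^2 * (a + beta 0%nat * eI)^2) by (unfold S; ring).
      apply Rmult_le_compat_l; [apply pow2_ge_0 | apply pow_incr; lra]. }
    assert (eps^2 * (omega + mu + bn + beta 0%nat)^2 <= eps * (mu * c0 * b0 / 2)) by nra.
    assert ((mu * c0 / 2) * (eps * b0) <= (- P) * (- Q)) by (apply Rmult_le_compat; nra).
    nra. }
  assert (HPneg : P < 0) by (assert (0 < mu * c0) by (apply Rmult_lt_0_compat; lra); lra).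
  pose proof (quad_form_nonpos P Q S yn yI HPneg HS). lra.
Qed.

Lemma coupling_sq_le yn yI : (2 * b * yI + 2 * eps * yn)^2 <= 32 * bn^2 * yI^2 + 8 * eps^2 * yn^2.
Proof.
  pose proof (sq_sum2_le (2 * b * yI) (2 * eps * yn)).
  assert (b^2 <= 4 * bn^2).
  { replace (b^2) with (bn^2 * (e (S n'))^2) by ring.
    assert ((e (S n'))^2 <= 4) by nra. pose proof (pow2_ge_0 bn). nra. }
  assert (b^2 * yI^2 <= 4 * bn^2 * yI^2) by (apply Rmult_le_compat_r; [apply pow2_ge_0 | lra]).
  nra.
Qed.

Lemma weighted_mid_sq_le x :
  (sum_lt (fun k => (beta (S k) - beta 0%nat) * y x (S k)) n')^2
  <= INR n' * bn^2 * sum_lt (fun k => (y x (S k))^2) n'.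
Proof.
  eapply Rle_trans; [apply sum_lt_sq_le|]. rewrite Rmult_assoc.
  apply Rmult_le_compat_l; [apply pos_INR|]. rewrite <- sum_lt_scal.
  apply sum_lt_le. intros k Hk. rewrite Rpow_mult_distr.
  apply Rmult_le_compat_r; [apply pow2_ge_0|]. pose proof (beta_b (S k) ltac:(lia)).
  apply pow_incr. lra.
Qed.

Lemma coupling_rate_bound x yn yI :
  (2 * b * yI + 2 * eps * yn) *
    (eI * (beta 0%nat * sum_lt (y x) (S (S (S n'))) + sum_lt (fun k => (beta (S k) - beta 0%nat) * y x (S k)) n'))
  <= 32 * lam * bn^2 * yI^2 + 8 * lam * eps^2 * yn^2
     + ((beta 0%nat)^2 / (2 * lam)) * (sum_lt (y x) (S (S (S n'))))^2
     + (INR n' * bn^2 / (2 * lam)) * sum_lt (fun k => (y x (S k))^2) n'.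
Proof.
  set (X := 2 * b * yI + 2 * eps * yn).
  set (w := sum_lt (y x) (S (S (S n')))).
  set (G := sum_lt (fun k => (beta (S k) - beta 0%nat) * y x (S k)) n').
  set (Mid := sum_lt (fun k => (y x (S k))^2) n').
  pose proof (young_weighted X (eI * (beta 0%nat * w + G)) lam lam_pos).
  assert (Hsq : (eI * (beta 0%nat * w + G))^2 <= 2 * (beta 0%nat)^2 * w^2 + 2 * (INR n' * bn^2 * Mid)).
  { rewrite Rpow_mult_distr. pose proof (sq_sum2_le (beta 0%nat * w) G). pose proof (weighted_mid_sq_le x) as HG.
    assert (eI^2 * (beta 0%nat * w + G)^2 <= 1 * (beta 0%nat * w + G)^2)
      by (apply Rmult_le_compat_r; [apply pow2_ge_0 | nra]).
    fold G Mid in HG. nra. }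
  assert ((eI * (beta 0%nat * w + G))^2 / (4 * lam)
          <= (2 * (beta 0%nat)^2 * w^2 + 2 * (INR n' * bn^2 * Mid)) / (4 * lam))
    by (apply Rmult_le_compat_r; [left; apply Rinv_0_lt_compat | ]; lra).
  assert (lam * X^2 <= lam * (32 * bn^2 * yI^2 + 8 * eps^2 * yn^2))
    by (apply Rmult_le_compat_l; [lra | apply coupling_sq_le]).
  assert ((2 * (beta 0%nat)^2 * w^2 + 2 * (INR n' * bn^2 * Mid)) / (4 * lam) =
          ((beta 0%nat)^2 / (2 * lam)) * w^2 + (INR n' * bn^2 / (2 * lam)) * Mid) by (field; lra).
  lra.
Qed.

Lemma perturbation_rate_bound x rho : 0 <= rho -> (forall j, (j <= S (S n'))%nat -> Rabs (y x j) <= rho) ->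
  (2 * c * y x (S n') + 2 * eps * y x (S (S n'))) * (de p d n' * y x n' - bn * y x (S (S n')) * y x (S n'))
  <= (d + rho * bn) * (2 * g + 2 * eps) * dev_norm2 n' e x.
Proof.
  intros Hrho Hy.
  pose proof (de_b n' ltac:(lia)). pose proof (Hy (S (S n')) ltac:(lia)) as HyI.
  pose proof (dev_sq_le_norm2 n' e x (S n') ltac:(lia)). pose proof (dev_sq_le_norm2 n' e x (S (S n')) ltac:(lia)).
  pose proof (dev_sq_le_norm2 n' e x n' ltac:(lia)).
  set (T := dev_norm2 n' e x) in *.
  set (yn := y x (S n')) in *. set (yI := y x (S (S n'))) in *. set (yl := y x n') in *.
  assert (Hc : 0 <= c <= g) by (split; nra).
  assert (E1 : (2 * c * de p d n') * yn * yl <= (2 * c * d) * (yn^2 + yl^2) / 2)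
    by (apply young_Rabs; rewrite Rabs_pos_eq by nra; nra).
  assert (E2 : (2 * eps * de p d n') * yI * yl <= (2 * eps * d) * (yI^2 + yl^2) / 2)
    by (apply young_Rabs; rewrite Rabs_pos_eq by nra; nra).
  assert (E3 : (- (2 * c * bn) * yI) * yn * yn <= (2 * c * bn * rho) * (yn^2 + yn^2) / 2).
  { apply young_Rabs. rewrite Rabs_mult, Rabs_Ropp, Rabs_pos_eq by nra. apply Rmult_le_compat_l; nra. }
  assert (E4 : (- (2 * eps * bn) * yI) * yI * yn <= (2 * eps * bn * rho) * (yI^2 + yn^2) / 2).
  { apply young_Rabs. rewrite Rabs_mult, Rabs_Ropp, Rabs_pos_eq by nra. apply Rmult_le_compat_l; nra. }
  assert (F1 : (2 * c * d) * (yn^2 + yl^2) / 2 <= 2 * g * d * T).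
  { assert (0 <= c * d) by nra. assert (c * d <= g * d) by nra.
    assert (c * d * (yn^2 + yl^2) <= g * d * (2 * T)) by (apply Rmult_le_compat; nra). lra. }
  assert (F2 : (2 * eps * d) * (yI^2 + yl^2) / 2 <= 2 * eps * d * T).
  { assert (eps * d * (yI^2 + yl^2) <= eps * d * (2 * T)) by (apply Rmult_le_compat_l; nra). lra. }
  assert (F3 : (2 * c * bn * rho) * (yn^2 + yn^2) / 2 <= 2 * g * bn * rho * T).
  { assert (0 <= c * bn * rho) by (apply Rmult_le_pos; nra). assert (c * bn * rho <= g * bn * rho) by nra.
    assert (c * bn * rho * (yn^2 + yn^2) <= g * bn * rho * (2 * T)) by (apply Rmult_le_compat; nra). lra. }
  assert (F4 : (2 * eps * bn * rho) * (yI^2 + yn^2) / 2 <= 2 * eps * bn * rho * T).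
  { assert (0 <= eps * bn * rho) by (apply Rmult_le_pos; nra).
    assert (eps * bn * rho * (yI^2 + yn^2) <= eps * bn * rho * (2 * T)) by (apply Rmult_le_compat_l; lra). lra. }
  replace ((2 * c * yn + 2 * eps * yI) * (de p d n' * yl - bn * yI * yn)) with
    ((2 * c * de p d n') * yn * yl + (2 * eps * de p d n') * yI * yl
     + (- (2 * c * bn) * yI) * yn * yn + (- (2 * eps * bn) * yI) * yI * yn) by ring.
  lra.
Qed.

Lemma force_dev_sq_le x :
  (sum_lt (fun k => beta k * y x k) (S (S n')))^2 <= (INR n' + 2) * bn^2 * dev_norm2 n' e x.
Proof.
  eapply Rle_trans; [apply sum_lt_sq_le|].
  replace (INR (S (S n'))) with (INR n' + 2) by (rewrite !S_INR; ring). rewrite Rmult_assoc.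
  apply Rmult_le_compat_l; [pose proof (pos_INR n'); lra|].
  apply Rle_trans with (bn^2 * sum_lt (fun k => (y x k)^2) (S (S n'))).
  - rewrite <- sum_lt_scal. apply sum_lt_le. intros k Hk. rewrite Rpow_mult_distr.
    apply Rmult_le_compat_r; [apply pow2_ge_0|]. pose proof (beta_b k ltac:(lia)). apply pow_incr. lra.
  - apply Rmult_le_compat_l; [apply pow2_ge_0|].
    apply sum_lt_prefix_le; [lia | intros; apply pow2_ge_0].
Qed.

Lemma cubic_rate_bound x rho : Rabs (y x (S (S n'))) <= rho ->
  (2 * b * y x (S (S n')) + 2 * eps * y x (S n')) *
    (y x (S (S n')) * sum_lt (fun k => beta k * y x k) (S (S n')))
  <= rho * (32 * bn^2 + 8 * eps^2 + (INR n' + 2) * bn^2) / 2 * dev_norm2 n' e x.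
Proof.
  intros HyI.
  set (X := 2 * b * y x (S (S n')) + 2 * eps * y x (S n')).
  set (Sy := sum_lt (fun k => beta k * y x k) (S (S n'))).
  assert (HX : X^2 <= (32 * bn^2 + 8 * eps^2) * dev_norm2 n' e x).
  { pose proof (coupling_sq_le (y x (S n')) (y x (S (S n')))) as H. fold X in H.
    pose proof (dev_sq_le_norm2 n' e x (S n') ltac:(lia)). pose proof (dev_sq_le_norm2 n' e x (S (S n')) ltac:(lia)).
    assert (32 * bn^2 * (y x (S (S n')))^2 <= 32 * bn^2 * dev_norm2 n' e x) by (apply Rmult_le_compat_l; nra).
    assert (8 * eps^2 * (y x (S n'))^2 <= 8 * eps^2 * dev_norm2 n' e x) by (apply Rmult_le_compat_l; nra).
    lra. }
  pose proof (force_dev_sq_le x) as HS. fold Sy in HS.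
  pose proof (young_Rabs (y x (S (S n'))) X Sy rho HyI).
  assert (rho * (X^2 + Sy^2) <= rho * ((32 * bn^2 + 8 * eps^2 + (INR n' + 2) * bn^2) * dev_norm2 n' e x))
    by (apply Rmult_le_compat_l; [pose proof (Rabs_pos (y x (S (S n')))); lra | lra]).
  replace (X * (y x (S (S n')) * Sy)) with (y x (S (S n')) * X * Sy) by ring. lra.
Qed.

Variables (L K : R).
Hypothesis lam_I : 32 * lam * bn^2 <= eps * b0 / 2.
Hypothesis lam_n : 8 * lam * eps^2 <= mu * c0 / 4.
Hypothesis L_large : (beta 0%nat)^2 / (2 * lam) + mu <= 2 * L * mu.
Hypothesis K_large : INR n' * bn^2 / (2 * lam) + mu <= 2 * K * mu.
Hypothesis L_ge1 : 1 <= L.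
Hypothesis K_ge1 : 1 <= K.

Local Notation rate_gap := (Rmin mu (Rmin (mu * c0 / 4) (eps * b0 / 2))).
Local Notation drift_coef := (K * (2 + bn * E * (1 + INR n')) + 2 * g + 2 * eps).
Local Notation cubic_coef :=
  (2 * K * bn + bn * (2 * g + 2 * eps) + (32 * bn^2 + 8 * eps^2 + (INR n' + 2) * bn^2) / 2).
Local Notation norm_ratio := (INR (S (S (S n'))) * (3 * (INR n' + 2))).

Lemma rate_gap_pos : 0 < rate_gap.
Proof. apply Rmin_pos; [lra | apply Rmin_pos; apply Rdiv_lt_0_compat; try apply Rmult_lt_0_compat; lra]. Qed.

Lemma drift_coef_nonneg : 0 <= drift_coef.
Proof.
  pose proof (pos_INR n').
  assert (0 <= bn * E * (1 + INR n')) by (apply Rmult_le_pos; [apply Rmult_le_pos|]; lra).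
  assert (0 <= K * (2 + bn * E * (1 + INR n'))) by (apply Rmult_le_pos; lra). lra.
Qed.

Lemma cubic_coef_nonneg : 0 <= cubic_coef.
Proof.
  pose proof (pos_INR n').
  assert (0 <= 2 * K * bn) by (apply Rmult_le_pos; lra).
  assert (0 <= bn * (2 * g + 2 * eps)) by (apply Rmult_le_pos; lra).
  assert (0 <= (INR n' + 2) * bn^2) by (apply Rmult_le_pos; [lra | apply pow2_ge_0]).
  pose proof (pow2_ge_0 bn). pose proof (pow2_ge_0 eps). lra.
Qed.

Lemma diagonal_rate_le w Mid yn yI : 0 <= Mid ->
  -2 * L * mu * w^2 - 2 * K * mu * Mid - (mu * c0 / 2) * yn^2 - eps * b0 * yI^2
  + (32 * lam * bn^2 * yI^2 + 8 * lam * eps^2 * yn^2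
     + ((beta 0%nat)^2 / (2 * lam)) * w^2 + (INR n' * bn^2 / (2 * lam)) * Mid)
  <= - rate_gap * (w^2 + Mid + yn^2 + yI^2).
Proof.
  intros HMid.
  assert (Hk1 : rate_gap <= mu) by apply Rmin_l.
  assert (Hk2 : rate_gap <= mu * c0 / 4) by (eapply Rle_trans; [apply Rmin_r | apply Rmin_l]).
  assert (Hk3 : rate_gap <= eps * b0 / 2) by (eapply Rle_trans; [apply Rmin_r | apply Rmin_r]).
  pose proof (pow2_ge_0 w). pose proof (pow2_ge_0 yn). pose proof (pow2_ge_0 yI).
  assert (rate_gap * w^2 <= mu * w^2) by (apply Rmult_le_compat_r; lra).
  assert (rate_gap * Mid <= mu * Mid) by (apply Rmult_le_compat_r; lra).
  assert (rate_gap * yn^2 <= mu * c0 / 4 * yn^2) by (apply Rmult_le_compat_r; lra).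
  assert (rate_gap * yI^2 <= eps * b0 / 2 * yI^2) by (apply Rmult_le_compat_r; lra).
  assert (((beta 0%nat)^2 / (2 * lam) + mu) * w^2 <= 2 * L * mu * w^2) by (apply Rmult_le_compat_r; lra).
  assert ((INR n' * bn^2 / (2 * lam) + mu) * Mid <= 2 * K * mu * Mid) by (apply Rmult_le_compat_r; lra).
  assert (32 * lam * bn^2 * yI^2 <= eps * b0 / 2 * yI^2) by (apply Rmult_le_compat_r; lra).
  assert (8 * lam * eps^2 * yn^2 <= mu * c0 / 4 * yn^2) by (apply Rmult_le_compat_r; lra).
  lra.
Qed.

(** Each block has a strictly negative diagonal part; what is left is
    [O(δ + ρ)] times the squared distance to [e]. *)
Lemma lyap_rate_bound x rho : 0 <= rho -> (forall j, (j <= S (S n'))%nat -> Rabs (y x j) <= rho) ->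
  lyap_rate n' e b c L K eps (F x) x
  <= - rate_gap * lyap_norm2 n' e x + (d * drift_coef + rho * cubic_coef) * dev_norm2 n' e x.
Proof.
  intros Hrho Hy.
  pose proof (mid_rate_bound x rho (Hy (S (S n')) ltac:(lia))) as HMS.
  pose proof (block_rate_bound (y x (S n')) (y x (S (S n')))) as HB.
  pose proof (coupling_rate_bound x (y x (S n')) (y x (S (S n')))) as HC.
  pose proof (perturbation_rate_bound x rho Hrho Hy) as HP.
  pose proof (cubic_rate_bound x rho (Hy (S (S n')) ltac:(lia))) as HQ.
  pose proof (diagonal_rate_le (sum_lt (y x) (S (S (S n')))) (sum_lt (fun k => (y x (S k))^2) n')
                (y x (S n')) (y x (S (S n'))) (mid_norm2_nonneg n' e x)) as HD.
  assert (HSy : sum_lt (fun k => beta k * y x k) (S (S n'))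
                = beta 0%nat * (sum_lt (y x) (S (S (S n'))) - y x (S (S n')))
                  + sum_lt (fun k => (beta (S k) - beta 0%nat) * y x (S k)) n' + g * y x (S n'))
    by (rewrite sum_beta_split, (sum_lt_S (y x) (S (S n'))); ring).
  unfold lyap_rate, lyap_norm2. rewrite rate_total, rate_I, rate_last, HSy. rewrite HSy in HQ.
  replace (x (S (S n'))) with (eI + y x (S (S n'))) by (unfold dev; ring).
  set (T := dev_norm2 n' e x) in *.
  set (w := sum_lt (y x) (S (S (S n')))) in *.
  set (Mid := sum_lt (fun k => (y x (S k))^2) n') in *.
  set (MS := sum_lt (fun k => 2 * y x (S k) * F x (S k)) n') in *.
  set (G := sum_lt (fun k => (beta (S k) - beta 0%nat) * y x (S k)) n') in *.
  set (yn := y x (S n')) in *. set (yI := y x (S (S n'))) in *. set (yl := y x n') in *.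
  assert (K * MS <= K * (-2 * mu * Mid + (d * (2 + bn * E * (1 + INR n')) + 2 * bn * rho) * T))
    by (apply Rmult_le_compat_l; lra).
  match goal with |- ?lhs <= _ => replace lhs with
    (2 * L * w * (- mu * w) + K * MS
     + ((2 * c * yn + 2 * eps * yI) * (- (om p omega (S n') + mu + bn * eI) * yn - b * yI)
        + (2 * b * yI + 2 * eps * yn) * (eI * (- beta 0%nat * yI + g * yn)))
     + (2 * b * yI + 2 * eps * yn) * (eI * (beta 0%nat * w + G))
     + (2 * c * yn + 2 * eps * yI) * (de p d n' * yl - bn * yI * yn)
     + (2 * b * yI + 2 * eps * yn) * (yI * (beta 0%nat * (w - yI) + G + g * yn))) by ring end.
  lra.
Qed.

Hypothesis eps_le_c0 : eps <= c0 / 2.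
Hypothesis eps_le_b0 : eps <= b0 / 2.

Lemma lyap_rate_decay x rho : 0 <= rho ->
  d * drift_coef * norm_ratio <= rate_gap / 4 -> rho * cubic_coef * norm_ratio <= rate_gap / 4 ->
  Defs.close (S (S n')) rho x e ->
  lyap_rate n' e b c L K eps (F x) x <= - (rate_gap / (2 * (L + K + c + b + eps))) * lyap n' e b c L K eps x.
Proof.
  intros Hrho Hd Hr Hcl.
  pose proof rate_gap_pos. pose proof (pos_INR n').
  pose proof (lyap_norm2_nonneg n' e x) as HU.
  pose proof (lyap_rate_bound x rho Hrho (fun j Hj => Rlt_le _ _ (Hcl j Hj))) as HW.
  pose proof (lyap_upper n' e b c L K eps L_ge1 K_ge1 ltac:(lra) ltac:(lra) ltac:(lra) x) as HV.
  pose proof drift_coef_nonneg as HCp.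
  pose proof cubic_coef_nonneg as HCn.
  assert (HT : dev_norm2 n' e x <= norm_ratio * lyap_norm2 n' e x)
    by (pose proof (dev_norm2_le_lyap_norm2 n' e x); lra).
  assert ((d * drift_coef + rho * cubic_coef) * dev_norm2 n' e x <= rate_gap / 2 * lyap_norm2 n' e x).
  { apply Rle_trans with ((d * drift_coef + rho * cubic_coef) * (norm_ratio * lyap_norm2 n' e x));
      [apply Rmult_le_compat_l; [apply Rplus_le_le_0_compat; apply Rmult_le_pos; lra | lra]|].
    replace ((d * drift_coef + rho * cubic_coef) * (norm_ratio * lyap_norm2 n' e x))
      with ((d * drift_coef * norm_ratio + rho * cubic_coef * norm_ratio) * lyap_norm2 n' e x) by ring.
    apply Rmult_le_compat_r; lra. }
  assert (HCV : 0 < L + K + c + b + eps) by lra.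
  assert (rate_gap / (2 * (L + K + c + b + eps)) * lyap n' e b c L K eps x <= rate_gap / 2 * lyap_norm2 n' e x).
  { replace (rate_gap / (2 * (L + K + c + b + eps)) * lyap n' e b c L K eps x)
      with (rate_gap / 2 * (lyap n' e b c L K eps x / (L + K + c + b + eps))) by (field; lra).
    apply Rmult_le_compat_l; [lra|]. apply Rmult_le_reg_r with (L + K + c + b + eps); [lra|].
    replace (lyap n' e b c L K eps x / (L + K + c + b + eps) * (L + K + c + b + eps))
      with (lyap n' e b c L K eps x) by (field; lra). lra. }
  lra.
Qed.

Lemma endemic_stable_of_weights :
  d * drift_coef * norm_ratio <= rate_gap / 4 -> loc_asymp_stable F (S (S n')) e.
Proof.
  intros Hd. pose proof rate_gap_pos. pose proof (pos_INR n').
  pose proof cubic_coef_nonneg as HCn.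
  assert (HCT : 0 < norm_ratio) by (apply Rmult_lt_0_compat; [apply lt_0_INR; lia | lra]).
  set (rho := rate_gap / (4 * (cubic_coef * norm_ratio + 1))).
  assert (Hrho : 0 < rho) by (apply Rdiv_lt_0_compat; nra).
  assert (Hrho_small : rho * cubic_coef * norm_ratio <= rate_gap / 4).
  { unfold rho. apply Rmult_le_reg_r with (4 * (cubic_coef * norm_ratio + 1)); [nra|].
    replace (rate_gap / (4 * (cubic_coef * norm_ratio + 1)) * cubic_coef * norm_ratio
             * (4 * (cubic_coef * norm_ratio + 1)))
      with (rate_gap * (cubic_coef * norm_ratio)) by (field; nra).
    nra. }
  assert (HmV : 0 < Rmin 1 (Rmin (c / 2) (b / 2))) by (apply Rmin_pos; [lra | apply Rmin_pos; lra]).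
  apply (lyapunov_loc_asymp_stable F (S (S n')) e (lyap n' e b c L K eps)
           (fun x => lyap_rate n' e b c L K eps (F x) x)
           (Rmin 1 (Rmin (c / 2) (b / 2)) / (3 * (INR n' + 2)))
           ((L + K + c + b + eps) * ((INR (S (S (S n'))))^2 + INR n' + 2))
           (rate_gap / (2 * (L + K + c + b + eps))) rho).
  - intros x t Hx. apply lyap_derive, Hx.
  - apply Rdiv_lt_0_compat; lra.
  - intros x i Hi. apply (lyap_coercive n' e b c L K eps); try lra. exact Hi.
  - apply Rmult_le_pos; [lra|]. pose proof (pow2_ge_0 (INR (S (S (S n'))))). lra.
  - intros x r0 Hr0 Hcl.
    pose proof (lyap_upper n' e b c L K eps L_ge1 K_ge1 ltac:(lra) ltac:(lra) ltac:(lra) x).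
    pose proof (lyap_norm2_le_close n' e x r0 Hr0 Hcl).
    rewrite Rmult_assoc. eapply Rle_trans; [eassumption|]. apply Rmult_le_compat_l; lra.
  - apply Rdiv_lt_0_compat; lra.
  - exact Hrho.
  - intros x Hcl. apply (lyap_rate_decay x rho); lra || exact Hcl.
Qed.

End RateBound.

(** * Choice of weights and the main theorem *)

Definition holds_for_small (P : R -> Prop) : Prop :=
  exists d0, 0 < d0 /\ forall d, 0 <= d <= d0 -> P d.

Lemma holds_for_small_and (P Q : R -> Prop) :
  holds_for_small P -> holds_for_small Q -> holds_for_small (fun d => P d /\ Q d).
Proof.
  intros [d1 [Hd1 HP]] [d2 [Hd2 HQ]]. exists (Rmin d1 d2). split; [apply Rmin_pos; lra|].
  intros d Hd. pose proof (Rmin_l d1 d2). pose proof (Rmin_r d1 d2). split; [apply HP | apply HQ]; lra.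
Qed.

Lemma holds_for_small_impl (P Q : R -> Prop) :
  holds_for_small P -> (forall d, 0 <= d -> P d -> Q d) -> holds_for_small Q.
Proof. intros [d0 [Hd0 HP]] HPQ. exists d0. split; [exact Hd0|]. intros d Hd. apply HPQ, HP; lra. Qed.

Lemma holds_for_small_mul_le A B : 0 <= A -> 0 < B -> holds_for_small (fun d => d * A <= B).
Proof.
  intros HA HB. exists (B / (A + 1)). split; [apply Rdiv_lt_0_compat; lra|].
  intros d [Hd0 Hd]. apply Rle_trans with (d * (A + 1)); [nra|].
  apply Rmult_le_compat_r with (r := A + 1) in Hd; [|lra].
  replace (B / (A + 1) * (A + 1)) with B in Hd by (field; lra). exact Hd.
Qed.

Section SmallWaning.

Variables (n' : nat) (omega r mu : R) (p beta : nat -> R).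

Hypothesis omega_ge0 : 0 <= omega.
Hypothesis r_pos : 0 < r.
Hypothesis mu_pos : 0 < mu.
Hypothesis p0 : p 0%nat = 0.
Hypothesis p_range : forall i : nat, (1 <= i <= S n')%nat -> 0 <= p i <= 1.
Hypothesis beta0_ge0 : 0 <= beta 0%nat.
Hypothesis beta_mono : forall i : nat, (i < S n')%nat -> beta i <= beta (S i).
Hypothesis beta0_lt : beta 0%nat < beta (S n').
Hypothesis threshold :
  (om p omega (S n') + mu) * (mu + r) < beta 0%nat * om p omega (S n') + beta (S n') * mu.

Let om_b := om_bounds (S n') p omega omega_ge0 p_range.

Local Notation bn := (beta (S n')).
Local Notation g := (beta (S n') - beta 0%nat).
Local Notation M0 := (S0_bound omega r mu).

(** Lower bounds for [c = g I*] and [b = β_n S_n*], valid for all small [δ]. *)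
Definition c_floor := g * I_floor n' omega r mu p beta.
Definition b_floor := bn * (mu / (2 * (om p omega (S n') + bn + mu))).
Definition E_bound := M0 / mu.

Definition cross_weight :=
  Rmin (Rmin (mu / 2) (Rmin (c_floor / 2) (b_floor / 2)))
       ((mu * c_floor * b_floor / 2) / (omega + mu + bn + beta 0%nat)^2).
Definition young_weight :=
  Rmin ((cross_weight * b_floor / 2) / (32 * bn^2)) ((mu * c_floor / 4) / (8 * cross_weight^2)).
Definition total_weight := (beta 0%nat)^2 / (4 * young_weight * mu) + 1.
Definition mid_weight := INR n' * bn^2 / (4 * young_weight * mu) + 1.

Lemma M0_ge0 : 0 <= M0.
Proof. unfold S0_bound. apply Rdiv_le_0_compat; lra. Qed.

Lemma c_floor_pos : 0 < c_floor.
Proof.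
  pose proof (om_b (S n') ltac:(lia)).
  assert (0 < margin n' omega r mu p beta) by (unfold margin; lra).
  apply Rmult_lt_0_compat; [lra|]. apply Rdiv_lt_0_compat; [lra|]. nra.
Qed.

Lemma b_floor_pos : 0 < b_floor.
Proof. pose proof (om_b (S n') ltac:(lia)). apply Rmult_lt_0_compat; [lra | apply Rdiv_lt_0_compat; lra]. Qed.

Lemma cross_weight_pos : 0 < cross_weight.
Proof.
  pose proof c_floor_pos. pose proof b_floor_pos.
  unfold cross_weight. repeat apply Rmin_pos; try lra.
  apply Rdiv_lt_0_compat; [|apply pow_lt; lra].
  apply Rdiv_lt_0_compat; [apply Rmult_lt_0_compat; [apply Rmult_lt_0_compat|] | ]; lra.
Qed.

Lemma cross_weight_bounds :
  cross_weight <= mu / 2 /\ cross_weight <= c_floor / 2 /\ cross_weight <= b_floor / 2 /\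
  cross_weight * (omega + mu + bn + beta 0%nat)^2 <= mu * c_floor * b_floor / 2.
Proof.
  pose proof (Rmin_l (mu / 2) (Rmin (c_floor / 2) (b_floor / 2))).
  pose proof (Rmin_r (mu / 2) (Rmin (c_floor / 2) (b_floor / 2))).
  pose proof (Rmin_l (c_floor / 2) (b_floor / 2)). pose proof (Rmin_r (c_floor / 2) (b_floor / 2)).
  pose proof (Rmin_l (Rmin (mu / 2) (Rmin (c_floor / 2) (b_floor / 2)))
                     ((mu * c_floor * b_floor / 2) / (omega + mu + bn + beta 0%nat)^2)) as Hmin.
  fold cross_weight in Hmin.
  repeat split; try lra.
  apply Rle_div_r; [apply pow_lt; lra | apply Rmin_r].
Qed.

Lemma young_weight_pos : 0 < young_weight.
Proof.
  pose proof c_floor_pos. pose proof b_floor_pos. pose proof cross_weight_pos.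
  unfold young_weight. apply Rmin_pos; apply Rdiv_lt_0_compat; nra.
Qed.

Lemma young_weight_bounds :
  32 * young_weight * bn^2 <= cross_weight * b_floor / 2 /\ 8 * young_weight * cross_weight^2 <= mu * c_floor / 4.
Proof.
  pose proof cross_weight_pos. split.
  - replace (32 * young_weight * bn^2) with (young_weight * (32 * bn^2)) by ring.
    apply Rle_div_r; [apply Rmult_lt_0_compat; [lra | apply pow_lt; lra] | apply Rmin_l].
  - replace (8 * young_weight * cross_weight^2) with (young_weight * (8 * cross_weight^2)) by ring.
    apply Rle_div_r; [apply Rmult_lt_0_compat; [lra | apply pow_lt; lra] | apply Rmin_r].
Qed.

Lemma total_weight_bounds :
  1 <= total_weight /\ (beta 0%nat)^2 / (2 * young_weight) + mu <= 2 * total_weight * mu.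
Proof.
  pose proof young_weight_pos. unfold total_weight. split.
  - assert (0 <= (beta 0%nat)^2 / (4 * young_weight * mu)) by (apply Rdiv_le_0_compat; [apply pow2_ge_0 | nra]).
    lra.
  - replace (2 * ((beta 0%nat)^2 / (4 * young_weight * mu) + 1) * mu)
      with ((beta 0%nat)^2 / (2 * young_weight) + 2 * mu) by (field; lra).
    lra.
Qed.

Lemma mid_weight_bounds :
  1 <= mid_weight /\ INR n' * bn^2 / (2 * young_weight) + mu <= 2 * mid_weight * mu.
Proof.
  pose proof young_weight_pos. pose proof (pos_INR n'). unfold mid_weight. split.
  - assert (0 <= INR n' * bn^2 / (4 * young_weight * mu))
      by (apply Rdiv_le_0_compat; [apply Rmult_le_pos; [lra | apply pow2_ge_0] | nra]). lra.
  - replace (2 * (INR n' * bn^2 / (4 * young_weight * mu) + 1) * mu)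
      with (INR n' * bn^2 / (2 * young_weight) + 2 * mu) by (field; lra).
    lra.
Qed.

Local Notation rate_gap_w := (Rmin mu (Rmin (mu * c_floor / 4) (cross_weight * b_floor / 2))).
Local Notation drift_coef_w := (mid_weight * (2 + bn * E_bound * (1 + INR n')) + 2 * g + 2 * cross_weight).
Local Notation norm_ratio := (INR (S (S (S n'))) * (3 * (INR n' + 2))).
Local Notation mid_coef := ((om p omega (S n') + mu) * INR n' * bn + mu * g).

Lemma small_waning_conditions : holds_for_small (fun d =>
  d <= mu /\ d * omega * INR (S n') <= mu^2 / 2 /\ d * M0 <= mu / 2 /\
  d * M0 * mid_coef <= mu * margin n' omega r mu p beta / 2 /\
  d * drift_coef_w * norm_ratio <= rate_gap_w / 4).
Proof.
  pose proof M0_ge0. pose proof c_floor_pos. pose proof b_floor_pos. pose proof cross_weight_pos.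
  pose proof (pos_INR n'). pose proof (om_b (S n') ltac:(lia)).
  destruct total_weight_bounds as [HL _]. destruct mid_weight_bounds as [HK _].
  assert (HE : 0 <= E_bound) by (apply Rdiv_le_0_compat; lra).
  assert (Hdrift : 0 <= drift_coef_w).
  { assert (0 <= bn * E_bound * (1 + INR n')) by (apply Rmult_le_pos; [apply Rmult_le_pos|]; lra).
    assert (0 <= mid_weight * (2 + bn * E_bound * (1 + INR n'))) by (apply Rmult_le_pos; lra). lra. }
  assert (Hmid : 0 <= mid_coef) by (apply Rplus_le_le_0_compat; apply Rmult_le_pos; try apply Rmult_le_pos; lra).
  assert (Hgap : 0 < rate_gap_w) by (apply Rmin_pos; [lra | apply Rmin_pos; nra]).
  assert (Hmargin : 0 < margin n' omega r mu p beta) by (unfold margin; lra).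
  eapply holds_for_small_impl.
  { apply holds_for_small_and; [apply holds_for_small_and; [apply holds_for_small_and;
      [apply holds_for_small_and|]|]|].
    - apply (holds_for_small_mul_le 1 mu); lra.
    - apply (holds_for_small_mul_le (omega * INR (S n')) (mu^2 / 2));
        [apply Rmult_le_pos; [lra | apply pos_INR] | apply Rdiv_lt_0_compat; [apply pow_lt|]; lra].
    - apply (holds_for_small_mul_le M0 (mu / 2)); lra.
    - apply (holds_for_small_mul_le (M0 * mid_coef) (mu * margin n' omega r mu p beta / 2));
        [apply Rmult_le_pos | apply Rdiv_lt_0_compat; [apply Rmult_lt_0_compat|]]; lra.
    - apply (holds_for_small_mul_le (drift_coef_w * norm_ratio) (rate_gap_w / 4));
        [apply Rmult_le_pos; [|apply Rmult_le_pos; [apply pos_INR|]] | ]; lra. }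
  intros d _ [[[[C1 C2] C3] C4] C5]. rewrite Rmult_1_r in C1. rewrite <- !Rmult_assoc in C2, C4, C5.
  repeat split; assumption.
Qed.

Lemma stable_of_small_waning d : 0 <= d ->
  d <= mu -> d * omega * INR (S n') <= mu^2 / 2 -> d * M0 <= mu / 2 ->
  d * M0 * mid_coef <= mu * margin n' omega r mu p beta / 2 ->
  d * drift_coef_w * norm_ratio <= rate_gap_w / 4 ->
  forall e, endemic_eq (S n') d omega r mu p beta e ->
            loc_asymp_stable (field (S n') d omega r mu p beta) (S (S n')) e.
Proof.
  intros Hd C1 C2 C3 C4 C5 e He.
  pose proof M0_ge0. pose proof c_floor_pos. pose proof b_floor_pos. pose proof cross_weight_pos.
  pose proof (om_b (S n') ltac:(lia)).
  destruct cross_weight_bounds as [He1 [He2 [He3 He4]]]. destruct young_weight_bounds as [Hl1 Hl2].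
  destruct total_weight_bounds as [HL1 HL2]. destruct mid_weight_bounds as [HK1 HK2].
  pose proof (endemic_last_range _ _ _ _ _ _ _ _ omega_ge0 r_pos mu_pos p0 p_range beta0_ge0 beta_mono
                Hd He C1 C2 C3) as Hlast.
  pose proof (endemic_I_lower _ _ _ _ _ _ _ _ omega_ge0 r_pos mu_pos p0 p_range beta0_ge0 beta_mono Hd He C1 C2 C3
                beta0_lt C4) as HI.
  pose proof (endemic_last_lower _ _ _ _ _ _ _ _ omega_ge0 r_pos mu_pos p0 p_range beta0_ge0 beta_mono
                Hd He C1 C2 C3) as Hb.
  pose proof (endemic_S0_bound _ _ _ _ _ _ _ _ omega_ge0 r_pos mu_pos p0 p_range beta0_ge0 beta_mono Hd He C1 C2)
    as HS0.
  apply (endemic_stable_of_weights n' omega r mu d p beta e omega_ge0 mu_pos p0 p_range beta0_ge0 beta_mono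
           beta0_lt Hd He
           E_bound) with (eps := cross_weight) (lam := young_weight) (c0 := c_floor) (b0 := b_floor)
                         (L := total_weight) (K := mid_weight);
    try lra; auto using young_weight_pos.
  - apply Rdiv_le_0_compat; lra.
  - intros k Hk.
    pose proof (endemic_mid_small _ _ _ _ _ _ _ _ omega_ge0 mu_pos p0 p_range beta0_ge0 beta_mono Hd He C1 k Hk).
    unfold E_bound. apply Rmult_le_reg_l with mu; [lra|].
    replace (mu * (d * (M0 / mu))) with (d * M0) by (field; lra).
    apply Rle_trans with (d * Rabs (e 0%nat)); [lra | apply Rmult_le_compat_l; lra].
  - unfold c_floor. apply Rmult_le_compat_l; lra.
  - unfold b_floor. apply Rmult_le_compat_l; [lra|].
    apply Rmult_le_reg_r with (2 * (om p omega (S n') + bn + mu)); [lra|].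
    replace (mu / (2 * (om p omega (S n') + bn + mu)) * (2 * (om p omega (S n') + bn + mu))) with mu
      by (field; lra).
    lra.
Qed.

Lemma stable_for_small_waning : holds_for_small (fun d =>
  forall e, endemic_eq (S n') d omega r mu p beta e ->
            loc_asymp_stable (field (S n') d omega r mu p beta) (S (S n')) e).
Proof.
  apply (holds_for_small_impl _ _ small_waning_conditions).
  intros d Hd [C1 [C2 [C3 [C4 C5]]]]. exact (stable_of_small_waning d Hd C1 C2 C3 C4 C5).
Qed.

End SmallWaning.

Theorem theorem4 (n : nat) (omega r mu : R) (p beta : nat -> R) :
  (1 <= n)%nat ->
  0 <= omega -> 0 < r -> 0 < mu ->
  p 0%nat = 0 ->
  (forall i : nat, (1 <= i <= n)%nat -> 0 <= p i <= 1) ->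
  0 <= beta 0%nat ->
  (forall i : nat, (i < n)%nat -> beta i <= beta (S i)) ->
  beta 0%nat < beta n ->
  (om p omega n + mu) * (mu + r) < beta 0%nat * om p omega n + beta n * mu ->
  exists delta0 : R, 0 < delta0 /\
    forall delta : R, 0 <= delta <= delta0 ->
      (exists e : nat -> R, endemic_eq n delta omega r mu p beta e) /\
      (forall e : nat -> R, endemic_eq n delta omega r mu p beta e ->
         loc_asymp_stable (field n delta omega r mu p beta) (S n) e).
Proof.
  intros Hn Hom Hr Hmu Hp0 Hp Hb0 Hmono Hbn Hthr.
  destruct n as [|n']; [lia|].
  destruct (stable_for_small_waning n' omega r mu p beta Hom Hr Hmu Hp0 Hp Hb0 Hmono Hbn Hthr)
    as [delta0 [Hdelta0 Hstable]].
  exists delta0. split; [exact Hdelta0|]. intros delta Hdelta. split.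
  - apply (exists_endemic n' omega r mu delta p beta); auto; lra.
  - apply Hstable, Hdelta.
Qed.
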